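(* Let $Z=x\frac{\partial}{\partial x}+\sum_{k=1}^n\big(\mathcal{A}y+G(x,y)\big)_k\frac{\partial}{\partial y_k}$ be a polynomial vector field on $\mathbb{C}^{n+1}$, where $\mathcal{A}\in\mathfrak{gl}(n,\mathbb{C})$ and $G$ is a polynomial map whose components lie in the ideal $(y_1,\dots,y_n)^2$. Suppose there are $\delta_0,\delta_1,\epsilon>0$ with $$(-\delta_1+\epsilon)|y|^2<\operatorname{Re}\langle\mathcal{A}y,y\rangle<(-\delta_0-\epsilon)|y|^2\quad\text{for all }y\in\mathbb{C}^n\setminus\{0\}.$$ For $x_0\in\widehat{\mathbb{D}}(2)$ and $y_0\in\mathbb{C}^n$, let $w(t)=(x_0^{1-t},y(t))$ be the solution of $w'=-\log(x_0)\,Z(w)$, $w(0)=(x_0,y_0)$, and when it is defined on $[0,1]$ set $f_{x_0}(y_0)=y(1)$. Then there exist $r,c_0,c_1>0$ such that for every $x\in\widehat{\mathbb{D}}(2)$ the map $f_x$ is defined on $\{|y|<r\}$ and $$c_1|x|^{\delta_1}|u-v|\le|f_x(u)-f_x(v)|\le c_0|x|^{\delta_0}|u-v|$$ for all $x\in\widehat{\mathbb{D}}(2)$ and $|u|,|v|<r$.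
   Context: $\widehat{\mathbb{D}}(2)=\{x\in\mathbb{C}\setminus(-\infty,0]:|x|<2\}$. $\log$ is the principal determination of the logarithm and $x_0^{1-t}=\exp((1-t)\log x_0)$. $\langle\cdot,\cdot\rangle$ is the standard Hermitian inner product and $|\cdot|$ the Euclidean norm. *)

From Stdlib Require Import Reals List.
From Coquelicot Require Import Coquelicot.

Open Scope R_scope.

(* Vectors of C^n are represented as functions nat -> C; only the
   coordinates k < n are meaningful (all operations below only look at them). *)

Fixpoint csum (n : nat) (f : nat -> C) : C :=
  match n with O => 0%R | S m => Cplus (csum m f) (f m) end.

Fixpoint nsum (n : nat) (f : nat -> nat) : nat :=
  match n with O => O | S m => (nsum m f + f m)%nat end.

Fixpoint cprod (n : nat) (f : nat -> C) : C :=
  match n with O => 1%R | S m => Cmult (cprod m f) (f m) end.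

Definition cinner (n : nat) (u v : nat -> C) : C :=
  csum n (fun k => Cmult (u k) (Cconj (v k))).

Definition vnorm (n : nat) (v : nat -> C) : R :=
  sqrt (Re (cinner n v v)).

Definition vsub (u v : nat -> C) : nat -> C := fun k => Cminus (u k) (v k).

Definition matvec (n : nat) (A : nat -> nat -> C) (y : nat -> C) : nat -> C :=
  fun k => csum n (fun j => Cmult (A k j) (y j)).

(* A monomial c * x^a * prod_{j<n} y_j^(b j) *)
Definition monomial : Type := (C * nat * (nat -> nat))%type.

Definition eval_monomial (n : nat) (m : monomial) (x : C) (y : nat -> C) : C :=
  let '(c, a, b) := m in
  Cmult c (Cmult (pow_n x a) (cprod n (fun j => pow_n (y j) (b j)))).

Definition polymap : Type := nat -> list monomial.

Definition eval_poly (n : nat) (G : polymap) (x : C) (y : nat -> C) : nat -> C :=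
  fun k => fold_right (fun m s => Cplus (eval_monomial n m x y) s) 0%R (G k).

(* Every component of G lies in the ideal (y_1,...,y_n)^2: every monomial has
   total degree >= 2 in the y-variables. *)
Definition in_ideal_y2 (n : nat) (G : polymap) : Prop :=
  forall k m, (k < n)%nat -> In m (G k) -> (2 <= nsum n (snd m))%nat.

Definition Cexp (z : C) : C :=
  (exp (Re z) * cos (Im z), exp (Re z) * sin (Im z)).

(* principal argument, valid on C \ (-oo,0] (half-angle formula):
   Arg z = 2 atan (Im z / (|z| + Re z)) in (-pi, pi). *)
Definition Carg (z : C) : R := 2 * atan (Im z / (Cmod z + Re z)).

Definition Clog (z : C) : C := (ln (Cmod z), Carg z).

Definition cpow_real (x0 : C) (s : R) : C := Cexp (Cmult (RtoC s) (Clog x0)).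

Definition slit_disc2 (x : C) : Prop :=
  Cmod x < 2 /\ ~ (Im x = 0 /\ Re x <= 0).

(* y : R -> C^n is the y-part of a solution w(t) = (x0^(1-t), y(t)) on [0,1]
   of w' = -log(x0) Z(w), Z = x d/dx + sum_k (A y + G(x,y))_k d/dy_k,
   with w(0) = (x0, y0).  (The x-component x0^(1-t) solves x' = -log(x0) x.) *)
Definition is_flow_sol (n : nat) (A : nat -> nat -> C) (G : polymap)
    (x0 : C) (y0 : nat -> C) (y : R -> nat -> C) : Prop :=
  (forall k, (k < n)%nat -> y 0 k = y0 k) /\
  forall t, 0 <= t <= 1 -> forall k, (k < n)%nat ->
    is_derive (fun s => y s k) t
      (Cmult (Copp (Clog x0))
         (Cplus (matvec n A (y t) k)
                (eval_poly n G (cpow_real x0 (1 - t)) (y t) k))).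

(* With lambda = -log x we have Re lambda > -1 and |Im lambda| <= pi.
   For solutions y1, y2 and d = y1 - y2, (|d|^2)' = 2 Re <lambda (A d + G(y1)
   - G(y2)), d>.  As G is in (y)^2, on the ball of radius rho it is
   (rho * const)-Lipschitz, hence eps-small for small rho, and the hypothesis
   on A gives the energy inequality (ln|x| delta1 - s)|d|^2 <= Re <d',d> <=
   (ln|x| delta0 + s)|d|^2 with s independent of x; Gronwall gives the bounds
   with c0 = e^s, c1 = e^-s.  Existence: the field is truncated by radially
   retracting y onto the l1-ball of radius rho, and Picard iteration converges
   on all of R in the weighted norm e^(-2K|t|).  The one-sided energy bound
   keeps solutions from a small ball inside the radius-rho ball, where the
   truncation is inactive; uniqueness (Gronwall) makes this apply to every
   solution. *)

From Stdlib Require Import Reals List Lra Lia Psatz.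
From Coquelicot Require Import Coquelicot.
Open Scope R_scope.

Ltac Ceq := apply injective_projections; simpl; ring.

Fixpoint rsum (n : nat) (f : nat -> R) : R :=
  match n with O => 0 | S m => rsum m f + f m end.

Lemma rsum_ext n f g : (forall k, (k < n)%nat -> f k = g k) -> rsum n f = rsum n g.
Proof.
  induction n; simpl; intros H; auto.
  rewrite IHn by (intros; apply H; lia). rewrite H by lia. auto.
Qed.

Lemma rsum_le n f g : (forall k, (k < n)%nat -> f k <= g k) -> rsum n f <= rsum n g.
Proof.
  induction n; simpl; intros H; [lra|].
  assert (H1 := H n ltac:(lia)).
  assert (rsum n f <= rsum n g) by (apply IHn; intros; apply H; lia). lra.
Qed.

Lemma rsum_nonneg n f : (forall k, (k < n)%nat -> 0 <= f k) -> 0 <= rsum n f.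
Proof.
  induction n; simpl; intros H; [lra|].
  assert (H1 := H n ltac:(lia)).
  assert (0 <= rsum n f) by (apply IHn; intros; apply H; lia). lra.
Qed.

Lemma rsum_plus n f g : rsum n (fun k => f k + g k) = rsum n f + rsum n g.
Proof. induction n; simpl; [lra|]. rewrite IHn; ring. Qed.

Lemma rsum_scal n c f : rsum n (fun k => c * f k) = c * rsum n f.
Proof. induction n; simpl; [lra|]. rewrite IHn; ring. Qed.

Lemma rsum_zero m : rsum m (fun _ => 0) = 0.
Proof. induction m; simpl; auto. rewrite IHm; lra. Qed.

Lemma rsum_term n f k :
  (forall j, (j < n)%nat -> 0 <= f j) -> (k < n)%nat -> f k <= rsum n f.
Proof.
  induction n; simpl; intros Hf Hk; [lia|].
  assert (0 <= rsum n f) by (apply rsum_nonneg; intros; apply Hf; lia).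
  destruct (Nat.eq_dec k n) as [->|Hkn]; [lra|].
  assert (f k <= rsum n f) by (apply IHn; [intros; apply Hf; lia| lia]).
  assert (H2 := Hf n ltac:(lia)). lra.
Qed.

Lemma rsum_const_le n f c : (forall k, (k < n)%nat -> f k <= c) -> rsum n f <= INR n * c.
Proof.
  induction n; cbn [rsum]; intros H; [simpl; lra|].
  assert (rsum n f <= INR n * c) by (apply IHn; intros; apply H; lia).
  assert (H1 := H n ltac:(lia)). rewrite S_INR. lra.
Qed.

Lemma re_csum n f : Re (csum n f) = rsum n (fun k => Re (f k)).
Proof. induction n; cbn [csum]; auto. rewrite re_plus, IHn; auto. Qed.

Lemma Cmod_csum n f : Cmod (csum n f) <= rsum n (fun k => Cmod (f k)).
Proof. induction n; simpl. rewrite Cmod_0; lra. eapply Rle_trans. apply Cmod_triangle. lra. Qed.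

Lemma csum_ext n f g : (forall k, (k < n)%nat -> f k = g k) -> csum n f = csum n g.
Proof.
  induction n; simpl; intros H; auto.
  rewrite IHn by (intros; apply H; lia). rewrite H by lia. auto.
Qed.

Lemma csum_scal n c f : csum n (fun k => Cmult c (f k)) = Cmult c (csum n f).
Proof. induction n; simpl. Ceq. rewrite IHn. Ceq. Qed.

Lemma csum_plus n f g :
  csum n (fun k => Cplus (f k) (g k)) = Cplus (csum n f) (csum n g).
Proof. induction n; simpl. Ceq. rewrite IHn. Ceq. Qed.

Lemma Rabs_le_between x y : Rabs x <= y -> - y <= x <= y.
Proof. unfold Rabs; destruct Rcase_abs; lra. Qed.

(** * Norms on C^n *)

(* |v|^2 = sum_k |v_k|^2 and the l1 norm sum_k |v_k|.  The l1 norm is the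
   one in which the truncated field is Lipschitz; it is equivalent to the
   Euclidean norm: |v| <= l1norm v <= n |v|. *)
Definition sqnorm n (v : nat -> C) := rsum n (fun k => Cmod (v k) ^ 2).
Definition l1norm n (v : nat -> C) := rsum n (fun k => Cmod (v k)).

Lemma sqnorm_nonneg n v : 0 <= sqnorm n v.
Proof. apply rsum_nonneg; intros. apply pow2_ge_0. Qed.

Lemma l1norm_nonneg n v : 0 <= l1norm n v.
Proof. apply rsum_nonneg; intros. apply Cmod_ge_0. Qed.

Lemma sqnorm_ext n u v : (forall k, (k < n)%nat -> u k = v k) -> sqnorm n u = sqnorm n v.
Proof. intros H; unfold sqnorm; apply rsum_ext; intros; rewrite H; auto. Qed.

Lemma l1norm_ext n u v : (forall k, (k < n)%nat -> u k = v k) -> l1norm n u = l1norm n v.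
Proof. intros H; unfold l1norm; apply rsum_ext; intros; rewrite H; auto. Qed.

Lemma re_cinner_self n v : Re (cinner n v v) = sqnorm n v.
Proof.
  unfold cinner, sqnorm. rewrite re_csum. apply rsum_ext; intros.
  rewrite Cmod2_alt. destruct (v k); simpl; ring.
Qed.

Lemma vnorm_sqnorm n v : vnorm n v = sqrt (sqnorm n v).
Proof. unfold vnorm; rewrite re_cinner_self; auto. Qed.

Lemma vnorm_sq n v : vnorm n v ^ 2 = sqnorm n v.
Proof. rewrite vnorm_sqnorm, pow2_sqrt; auto. apply sqnorm_nonneg. Qed.

Lemma vnorm_nonneg n v : 0 <= vnorm n v.
Proof. rewrite vnorm_sqnorm; apply sqrt_pos. Qed.

Lemma vnorm_ext n u v : (forall k, (k < n)%nat -> u k = v k) -> vnorm n u = vnorm n v.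
Proof. intros H; rewrite !vnorm_sqnorm, (sqnorm_ext n u v H); auto. Qed.

Lemma Cmod_le_vnorm n v k : (k < n)%nat -> Cmod (v k) <= vnorm n v.
Proof.
  intros Hk. rewrite vnorm_sqnorm, <- (sqrt_pow2 (Cmod (v k))) by apply Cmod_ge_0.
  apply sqrt_le_1_alt. apply (rsum_term n (fun k => Cmod (v k) ^ 2)); auto.
  intros; apply pow2_ge_0.
Qed.

Lemma Cmod_le_l1norm n v k : (k < n)%nat -> Cmod (v k) <= l1norm n v.
Proof. intros; apply (rsum_term n (fun k => Cmod (v k))); auto. intros; apply Cmod_ge_0. Qed.

Lemma vnorm_le_l1norm n v : vnorm n v <= l1norm n v.
Proof.
  rewrite vnorm_sqnorm, <- (sqrt_pow2 (l1norm n v)) by apply l1norm_nonneg.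
  apply sqrt_le_1_alt. unfold sqnorm, l1norm. induction n; simpl; [lra|].
  assert (0 <= rsum n (fun k => Cmod (v k))) by (apply rsum_nonneg; intros; apply Cmod_ge_0).
  assert (0 <= Cmod (v n)) by apply Cmod_ge_0. simpl in IHn. nra.
Qed.

Lemma l1norm_le_vnorm n v : l1norm n v <= INR n * vnorm n v.
Proof. apply rsum_const_le. intros; apply Cmod_le_vnorm; auto. Qed.

Lemma sqnorm_zero n v : sqnorm n v = 0 -> forall k, (k < n)%nat -> v k = 0%C.
Proof.
  intros H k Hk. apply Cmod_eq_0.
  assert (Cmod (v k) ^ 2 <= sqnorm n v).
  { apply (rsum_term n (fun k => Cmod (v k) ^ 2)); auto. intros; apply pow2_ge_0. }
  assert (0 <= Cmod (v k)) by apply Cmod_ge_0. nra.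
Qed.

Lemma l1norm_const0 m : l1norm m (fun _ => RtoC 0) = 0.
Proof. unfold l1norm; induction m; simpl; auto. rewrite IHm, Cmod_0. lra. Qed.

Lemma l1norm_scal n c z : l1norm n (fun k => Cmult (RtoC c) (z k)) = Rabs c * l1norm n z.
Proof.
  unfold l1norm. rewrite <- rsum_scal. apply rsum_ext; intros. rewrite Cmod_mult, Cmod_R. auto.
Qed.

Lemma sqnorm_scal n s w : sqnorm n (fun k => Cmult (RtoC s) (w k)) = s ^ 2 * sqnorm n w.
Proof.
  unfold sqnorm. rewrite <- rsum_scal. apply rsum_ext; intros.
  rewrite Cmod_mult, Cmod_R, Rpow_mult_distr, pow2_abs. auto.
Qed.

Lemma vnorm_scal n s w : 0 <= s -> vnorm n (fun k => Cmult (RtoC s) (w k)) = s * vnorm n w.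
Proof.
  intros Hs. rewrite !vnorm_sqnorm, sqnorm_scal, sqrt_mult_alt by apply pow2_ge_0.
  rewrite sqrt_pow2; auto.
Qed.

Lemma vnorm_zero_sub n v : vnorm n (vsub v (fun _ => RtoC 0)) = vnorm n v.
Proof. apply vnorm_ext; intros. unfold vsub. Ceq. Qed.

Lemma l1norm_sub_sym n u v : l1norm n (vsub u v) = l1norm n (vsub v u).
Proof. unfold l1norm, vsub. apply rsum_ext; intros. rewrite <- Cmod_opp. f_equal. Ceq. Qed.

Lemma l1norm_tri n a b c : l1norm n (vsub a c) <= l1norm n (vsub a b) + l1norm n (vsub b c).
Proof.
  unfold l1norm, vsub. rewrite <- rsum_plus. apply rsum_le; intros.
  replace (Cminus (a k) (c k)) with (Cplus (Cminus (a k) (b k)) (Cminus (b k) (c k))) by Ceq.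
  apply Cmod_triangle.
Qed.

Lemma l1norm_rev n u v : l1norm n u - l1norm n v <= l1norm n (vsub u v).
Proof.
  unfold l1norm, vsub.
  replace (rsum n (fun k => Cmod (u k)) - rsum n (fun k => Cmod (v k))) with
    (rsum n (fun k => Cmod (u k) + -1 * Cmod (v k)))
    by (rewrite rsum_plus, rsum_scal; ring).
  apply rsum_le; intros.
  replace (u k) with (Cplus (Cminus (u k) (v k)) (v k)) at 1 by Ceq.
  pose proof (Cmod_triangle (Cminus (u k) (v k)) (v k)). lra.
Qed.

Lemma l1norm_lin n c a b :
  l1norm n (fun k => Cmult c (Cplus (a k) (b k))) <= Cmod c * (l1norm n a + l1norm n b).
Proof.
  unfold l1norm. rewrite <- rsum_plus, <- rsum_scal. apply rsum_le; intros.
  rewrite Cmod_mult. apply Rmult_le_compat_l. apply Cmod_ge_0. apply Cmod_triangle.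
Qed.

Lemma l1norm_lin_diff n c a b a' b' :
  l1norm n (vsub (fun k => Cmult c (Cplus (a k) (b k))) (fun k => Cmult c (Cplus (a' k) (b' k))))
  <= Cmod c * (l1norm n (vsub a a') + l1norm n (vsub b b')).
Proof.
  unfold l1norm, vsub. rewrite <- rsum_plus, <- rsum_scal. apply rsum_le; intros.
  replace (Cminus (Cmult c (Cplus (a k) (b k))) (Cmult c (Cplus (a' k) (b' k)))) with
    (Cmult c (Cplus (Cminus (a k) (a' k)) (Cminus (b k) (b' k)))) by Ceq.
  rewrite Cmod_mult. apply Rmult_le_compat_l. apply Cmod_ge_0. apply Cmod_triangle.
Qed.

Lemma Cmod_cinner n u v : Cmod (cinner n u v) <= l1norm n u * vnorm n v.
Proof.
  unfold cinner. eapply Rle_trans. apply Cmod_csum.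
  unfold l1norm. rewrite Rmult_comm, <- rsum_scal.
  apply rsum_le; intros. rewrite Cmod_mult, Cmod_conj, Rmult_comm.
  apply Rmult_le_compat_r. apply Cmod_ge_0. apply Cmod_le_vnorm; auto.
Qed.

Lemma cinner_lin n lam a b d :
  cinner n (fun k => Cmult lam (Cplus (a k) (b k))) d
  = Cmult lam (Cplus (cinner n a d) (cinner n b d)).
Proof. unfold cinner. rewrite <- csum_plus, <- csum_scal. apply csum_ext; intros. Ceq. Qed.

Lemma im_le_Cmod c : Rabs (Im c) <= Cmod c.
Proof. pose proof (Rmax_Cmod c). eapply Rle_trans; [|apply H]. apply Rmax_r. Qed.

Lemma Cmod_le_sum (c : C) : Cmod c <= Rabs (fst c) + Rabs (snd c).
Proof.
  pose proof (Rabs_pos (fst c)); pose proof (Rabs_pos (snd c)).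
  unfold Cmod. rewrite <- (sqrt_pow2 (Rabs (fst c) + Rabs (snd c))) by lra.
  apply sqrt_le_1_alt.
  pose proof (pow2_abs (fst c)); pose proof (pow2_abs (snd c)). nra.
Qed.

(* The entrywise l1 norm of A bounds the operator norm |A v|_1 <= ||A|| |v|. *)
Definition matnorm n (A : nat -> nat -> C) := rsum n (fun k => rsum n (fun j => Cmod (A k j))).

Lemma matnorm_nonneg n A : 0 <= matnorm n A.
Proof. apply rsum_nonneg; intros; apply rsum_nonneg; intros; apply Cmod_ge_0. Qed.

Lemma l1norm_matvec n A v : l1norm n (matvec n A v) <= matnorm n A * vnorm n v.
Proof.
  unfold l1norm, matnorm. rewrite Rmult_comm, <- rsum_scal. apply rsum_le; intros k Hk.
  unfold matvec. eapply Rle_trans. apply Cmod_csum. rewrite <- rsum_scal.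
  apply rsum_le; intros j Hj. rewrite Cmod_mult, Rmult_comm.
  apply Rmult_le_compat_r. apply Cmod_ge_0. apply Cmod_le_vnorm; auto.
Qed.

Lemma Cmod_cinner_matvec n A d : Cmod (cinner n (matvec n A d) d) <= matnorm n A * sqnorm n d.
Proof.
  eapply Rle_trans. apply Cmod_cinner. rewrite <- vnorm_sq.
  pose proof (l1norm_matvec n A d). pose proof (vnorm_nonneg n d). simpl. nra.
Qed.

Lemma matvec_sub n A u v k : matvec n A (vsub u v) k = Cminus (matvec n A u k) (matvec n A v k).
Proof. unfold matvec, vsub. induction n; simpl. Ceq. rewrite IHn. Ceq. Qed.

Lemma matvec_scal n A s w k :
  matvec n A (fun j => Cmult (RtoC s) (w j)) k = Cmult (RtoC s) (matvec n A w k).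
Proof. unfold matvec. rewrite <- csum_scal. apply csum_ext; intros. Ceq. Qed.

Lemma matvec_ext n A y y' :
  (forall j, (j < n)%nat -> y j = y' j) -> forall k, matvec n A y k = matvec n A y' k.
Proof. intros H k. unfold matvec. apply csum_ext. intros; rewrite H; auto. Qed.

Lemma matvec_zero n A k : matvec n A (fun _ => RtoC 0) k = RtoC 0.
Proof. unfold matvec. induction n; simpl. auto. rewrite IHn. Ceq. Qed.

(** * Polynomial maps *)

Lemma pow_n_S (x : C) a : pow_n x (S a) = Cmult x (pow_n x a).
Proof. reflexivity. Qed.

Lemma pow_n_O (x : C) : pow_n x O = RtoC 1.
Proof. reflexivity. Qed.

Lemma Cmod_pow_n (x : C) a : Cmod (pow_n x a) = Cmod x ^ a.
Proof. induction a; [apply Cmod_1|]. rewrite pow_n_S, Cmod_mult, IHa. simpl; ring. Qed.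

(* On the disc of radius rho, z^a is (a rho^(a-1))-Lipschitz; the statement is
   multiplied by rho to avoid the exponent a - 1. *)
Lemma pow_n_lip (x y : C) rho a : Cmod x <= rho -> Cmod y <= rho ->
  rho * Cmod (Cminus (pow_n x a) (pow_n y a)) <= INR a * rho ^ a * Cmod (Cminus x y).
Proof.
  intros Hx Hy. assert (0 <= rho) by (pose proof (Cmod_ge_0 x); lra).
  induction a.
  - rewrite !pow_n_O. replace (Cminus 1 1) with (RtoC 0) by Ceq. rewrite Cmod_0. simpl. lra.
  - rewrite !pow_n_S.
    replace (Cminus (Cmult x (pow_n x a)) (Cmult y (pow_n y a))) with
      (Cplus (Cmult x (Cminus (pow_n x a) (pow_n y a))) (Cmult (Cminus x y) (pow_n y a))) by Ceq.
    eapply Rle_trans. apply Rmult_le_compat_l; [lra|apply Cmod_triangle].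
    rewrite !Cmod_mult, Cmod_pow_n.
    assert (0 <= Cmod x) by apply Cmod_ge_0. assert (0 <= Cmod y) by apply Cmod_ge_0.
    assert (0 <= Cmod (Cminus x y)) by apply Cmod_ge_0.
    assert (0 <= Cmod (Cminus (pow_n x a) (pow_n y a))) by apply Cmod_ge_0.
    assert (Cmod y ^ a <= rho ^ a) by (apply pow_incr; lra).
    assert (0 <= Cmod y ^ a) by (apply pow_le; lra).
    assert (0 <= rho ^ a) by (apply pow_le; lra).
    rewrite S_INR. simpl.
    assert (Cmod x * (rho * Cmod (Cminus (pow_n x a) (pow_n y a))) <= rho * (INR a * rho ^ a * Cmod (Cminus x y))).
    { apply Rmult_le_compat; try nra. }
    assert (0 <= INR a) by apply pos_INR.
    assert (Cmod x * (INR a * rho ^ a * Cmod (Cminus x y)) <= rho * (INR a * rho ^ a * Cmod (Cminus x y))).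
    { apply Rmult_le_compat_r; auto. apply Rmult_le_pos; [apply Rmult_le_pos|]; auto. }
    assert (rho * Cmod (Cminus x y) * Cmod y ^ a <= rho * Cmod (Cminus x y) * rho ^ a).
    { apply Rmult_le_compat_l; auto. apply Rmult_le_pos; auto. }
    nra.
Qed.

Lemma Cmod_cprod_pow n (u : nat -> C) b rho : 0 <= rho ->
  (forall j, (j < n)%nat -> Cmod (u j) <= rho) ->
  Cmod (cprod n (fun j => pow_n (u j) (b j))) <= rho ^ (nsum n b).
Proof.
  intros Hr. induction n; intros Hu; simpl. rewrite Cmod_1; lra.
  rewrite Cmod_mult, Cmod_pow_n, pow_add. apply Rmult_le_compat.
  apply Cmod_ge_0. apply pow_le, Cmod_ge_0. apply IHn; intros; apply Hu; lia.
  apply pow_incr. split. apply Cmod_ge_0. apply Hu; lia.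
Qed.

Lemma cprod_lip n (u v : nat -> C) b rho D :
  (forall j, (j < n)%nat -> Cmod (u j) <= rho) ->
  (forall j, (j < n)%nat -> Cmod (v j) <= rho) ->
  (forall j, (j < n)%nat -> Cmod (Cminus (u j) (v j)) <= D) ->
  rho * Cmod (Cminus (cprod n (fun j => pow_n (u j) (b j))) (cprod n (fun j => pow_n (v j) (b j))))
   <= INR (nsum n b) * rho ^ (nsum n b) * D.
Proof.
  intros Hu Hv HD. induction n; simpl.
  - replace (Cminus 1 1) with (RtoC 0) by Ceq. rewrite Cmod_0. lra.
  - assert (Hu' : forall j, (j < n)%nat -> Cmod (u j) <= rho) by (intros; apply Hu; lia).
    assert (Hv' : forall j, (j < n)%nat -> Cmod (v j) <= rho) by (intros; apply Hv; lia).
    assert (HD' : forall j, (j < n)%nat -> Cmod (Cminus (u j) (v j)) <= D) by (intros; apply HD; lia).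
    specialize (IHn Hu' Hv' HD').
    assert (0 <= rho) by (pose proof (Cmod_ge_0 (u n)); pose proof (Hu n ltac:(lia)); lra).
    set (P := cprod n (fun j => pow_n (u j) (b j))) in *.
    set (P' := cprod n (fun j => pow_n (v j) (b j))) in *.
    replace (Cminus (Cmult P (pow_n (u n) (b n))) (Cmult P' (pow_n (v n) (b n)))) with
      (Cplus (Cmult P (Cminus (pow_n (u n) (b n)) (pow_n (v n) (b n)))) (Cmult (Cminus P P') (pow_n (v n) (b n)))) by Ceq.
    eapply Rle_trans. apply Rmult_le_compat_l; [lra|apply Cmod_triangle].
    rewrite !Cmod_mult, Cmod_pow_n.
    assert (HP : Cmod P <= rho ^ nsum n b) by (apply Cmod_cprod_pow; auto).
    assert (Hpw := pow_n_lip (u n) (v n) rho (b n) (Hu n ltac:(lia)) (Hv n ltac:(lia))).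
    assert (HDn := HD n ltac:(lia)).
    assert (0 <= Cmod P) by apply Cmod_ge_0.
    assert (0 <= Cmod (Cminus P P')) by apply Cmod_ge_0.
    assert (0 <= Cmod (Cminus (u n) (v n))) by apply Cmod_ge_0.
    assert (0 <= Cmod (Cminus (pow_n (u n) (b n)) (pow_n (v n) (b n)))) by apply Cmod_ge_0.
    assert (Cmod (v n) ^ b n <= rho ^ b n) by (apply pow_incr; split; [apply Cmod_ge_0| apply Hv; lia]).
    assert (0 <= Cmod (v n) ^ b n) by (apply pow_le, Cmod_ge_0).
    assert (0 <= rho ^ b n) by (apply pow_le; lra).
    assert (0 <= rho ^ nsum n b) by (apply pow_le; lra).
    assert (0 <= INR (b n)) by apply pos_INR. assert (0 <= INR (nsum n b)) by apply pos_INR.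
    rewrite plus_INR, pow_add.
    assert (0 <= D) by (pose proof (Cmod_ge_0 (Cminus (u n) (v n))); lra).
    assert (A1 : Cmod P * (rho * Cmod (Cminus (pow_n (u n) (b n)) (pow_n (v n) (b n)))) <=
                 rho ^ nsum n b * (INR (b n) * rho ^ b n * D)).
    { apply Rmult_le_compat; try nra. eapply Rle_trans. apply Hpw. apply Rmult_le_compat_l; nra. }
    assert (A2 : (rho * Cmod (Cminus P P')) * Cmod (v n) ^ b n <= (INR (nsum n b) * rho ^ nsum n b * D) * rho ^ b n).
    { apply Rmult_le_compat; try nra. }
    nra.
Qed.

(* For each
   monomial we record its y-Lipschitz constant on {|x| <= 2, |y| <= rho}
   (times rho) and its x-Lipschitz constant on {|x| <= 2, |y| <= 1}. *)
Definition ylip_monomial n rho (m : monomial) : R :=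
  let '(c, a, b) := m in Cmod c * 2 ^ a * INR (nsum n b) * rho ^ (nsum n b).
Definition ylip_list n rho (l : list monomial) : R := fold_right (fun m s => ylip_monomial n rho m + s) 0 l.
Definition xlip_monomial (m : monomial) : R :=
  let '(c, a, b) := m in Cmod c * INR a * 2 ^ a.
Definition xlip_list (l : list monomial) : R := fold_right (fun m s => xlip_monomial m + s) 0 l.

Definition eval_list n (l : list monomial) x y : C :=
  fold_right (fun m s => Cplus (eval_monomial n m x y) s) (RtoC 0) l.

Lemma eval_poly_eval_list n G x y k : eval_poly n G x y k = eval_list n (G k) x y.
Proof. reflexivity. Qed.

Lemma ylip_monomial_nonneg n rho m : 0 <= rho -> 0 <= ylip_monomial n rho m.
Proof.
  destruct m as [[c a] b]; simpl; intros.
  repeat apply Rmult_le_pos; try apply Cmod_ge_0; try apply pow_le; try lra; apply pos_INR.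
Qed.

Lemma ylip_list_nonneg n rho l : 0 <= rho -> 0 <= ylip_list n rho l.
Proof.
  induction l; simpl; intros; [lra|].
  pose proof (ylip_monomial_nonneg n rho a H).
  specialize (IHl H).
  lra.
Qed.

Lemma xlip_monomial_nonneg m : 0 <= xlip_monomial m.
Proof.
  destruct m as [[c a] b]; simpl.
  repeat apply Rmult_le_pos; try apply Cmod_ge_0; try apply pow_le; try lra; apply pos_INR.
Qed.

Lemma xlip_list_nonneg l : 0 <= xlip_list l.
Proof. induction l; simpl; [lra|]. pose proof (xlip_monomial_nonneg a). lra. Qed.

Lemma monomial_lip_y n m x u v rho : 0 <= rho -> Cmod x <= 2 ->
  (forall j, (j < n)%nat -> Cmod (u j) <= rho) ->
  (forall j, (j < n)%nat -> Cmod (v j) <= rho) ->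
  rho * Cmod (Cminus (eval_monomial n m x u) (eval_monomial n m x v)) <= ylip_monomial n rho m * vnorm n (vsub u v).
Proof.
  intros Hr Hx Hu Hv. destruct m as [[c a] b]. unfold eval_monomial, ylip_monomial.
  replace (Cminus (Cmult c (Cmult (pow_n x a) (cprod n (fun j => pow_n (u j) (b j)))))
       (Cmult c (Cmult (pow_n x a) (cprod n (fun j => pow_n (v j) (b j))))))
    with (Cmult c (Cmult (pow_n x a) (Cminus (cprod n (fun j => pow_n (u j) (b j))) (cprod n (fun j => pow_n (v j) (b j)))))) by Ceq.
  rewrite !Cmod_mult, Cmod_pow_n.
  assert (H := cprod_lip n u v b rho (vnorm n (vsub u v)) Hu Hv ltac:(intros j Hj; apply (Cmod_le_vnorm n (vsub u v) j Hj))).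
  assert (0 <= Cmod c) by apply Cmod_ge_0. assert (0 <= Cmod x) by apply Cmod_ge_0.
  assert (Cmod x ^ a <= 2 ^ a) by (apply pow_incr; lra).
  assert (0 <= Cmod x ^ a) by (apply pow_le; lra).
  set (D := Cmod (Cminus _ _)) in *. assert (0 <= D) by apply Cmod_ge_0.
  assert (0 <= rho * D) by (apply Rmult_le_pos; auto).
  replace (rho * (Cmod c * (Cmod x ^ a * D))) with (Cmod c * (Cmod x ^ a * (rho * D))) by ring.
  replace (Cmod c * 2 ^ a * INR (nsum n b) * rho ^ nsum n b * vnorm n (vsub u v)) with
    (Cmod c * (2 ^ a * (INR (nsum n b) * rho ^ nsum n b * vnorm n (vsub u v)))) by ring.
  apply Rmult_le_compat_l; auto. apply Rmult_le_compat; auto.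
Qed.

Lemma eval_list_lip_y n l x u v rho : 0 <= rho -> Cmod x <= 2 ->
  (forall j, (j < n)%nat -> Cmod (u j) <= rho) ->
  (forall j, (j < n)%nat -> Cmod (v j) <= rho) ->
  rho * Cmod (Cminus (eval_list n l x u) (eval_list n l x v)) <= ylip_list n rho l * vnorm n (vsub u v).
Proof.
  intros Hr Hx Hu Hv. induction l; simpl.
  - replace (Cminus 0 0) with (RtoC 0) by Ceq.
    rewrite Cmod_0.
    pose proof (vnorm_nonneg n (vsub u v)).
    lra.
  - replace (Cminus (Cplus (eval_monomial n a x u) (eval_list n l x u)) (Cplus (eval_monomial n a x v) (eval_list n l x v)))
      with (Cplus (Cminus (eval_monomial n a x u) (eval_monomial n a x v)) (Cminus (eval_list n l x u) (eval_list n l x v))) by Ceq.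
    eapply Rle_trans. apply Rmult_le_compat_l; [lra|apply Cmod_triangle].
    pose proof (monomial_lip_y n a x u v rho Hr Hx Hu Hv). lra.
Qed.

Lemma poly_lip_y n G x u v rho : 0 <= rho -> Cmod x <= 2 -> vnorm n u <= rho -> vnorm n v <= rho ->
  rho * l1norm n (vsub (eval_poly n G x u) (eval_poly n G x v)) <= rsum n (fun k => ylip_list n rho (G k)) * vnorm n (vsub u v).
Proof.
  intros Hr Hx Hu Hv. unfold l1norm. rewrite <- rsum_scal. rewrite Rmult_comm, <- rsum_scal.
  apply rsum_le; intros k Hk. unfold vsub at 1. rewrite !eval_poly_eval_list.
  rewrite (Rmult_comm (vnorm _ _)). apply eval_list_lip_y; auto.
  intros j Hj; eapply Rle_trans; [apply Cmod_le_vnorm; eauto| auto].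
  intros j Hj; eapply Rle_trans; [apply Cmod_le_vnorm; eauto| auto].
Qed.

(* If every monomial has y-degree >= 2, the y-Lipschitz constant on the ball
   of radius rho <= 1 is O(rho): this is where G in (y)^2 is used. *)
Lemma ylip_list_small n rho l : 0 <= rho <= 1 -> (forall m, In m l -> (2 <= nsum n (snd m))%nat) ->
  ylip_list n rho l <= rho ^ 2 * ylip_list n 1 l.
Proof.
  intros Hr Hl. induction l; simpl. lra.
  assert (IH : ylip_list n rho l <= rho ^ 2 * ylip_list n 1 l) by (apply IHl; intros; apply Hl; simpl; auto).
  assert (ylip_monomial n rho a <= rho ^ 2 * ylip_monomial n 1 a).
  { destruct a as [[c a] b]. simpl. assert (H2 := Hl (c,a,b) (or_introl eq_refl)). simpl in H2.
    replace (nsum n b) with (2 + (nsum n b - 2))%nat by lia. rewrite pow_add, pow1.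
    assert (0 <= rho ^ (nsum n b - 2)) by (apply pow_le; lra).
    assert (rho ^ (nsum n b - 2) <= 1) by (rewrite <- (pow1 (nsum n b - 2)); apply pow_incr; lra).
    assert (0 <= Cmod c * 2 ^ a * INR (2 + (nsum n b - 2))).
    { repeat apply Rmult_le_pos; try apply Cmod_ge_0; try apply pow_le; try lra; apply pos_INR. }
    assert (0 <= rho^2) by apply pow2_ge_0.
    set (K := Cmod c * 2 ^ a * INR (2 + (nsum n b - 2))) in *.
    set (e := rho ^ (nsum n b - 2)) in *.
    replace (K * (rho ^ 2 * e)) with (rho^2 * (K * e)) by ring.
    replace (K * (1 * 1)) with K by ring.
    apply Rmult_le_compat_l; auto.
    assert (K * e <= K * 1) by (apply Rmult_le_compat_l; auto).
    lra.
    }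
  simpl. lra.
Qed.

Lemma eval_list_lip_x n l x x' w : Cmod x <= 2 -> Cmod x' <= 2 -> (forall j, (j < n)%nat -> Cmod (w j) <= 1) ->
  Cmod (Cminus (eval_list n l x w) (eval_list n l x' w)) <= xlip_list l * Cmod (Cminus x x').
Proof.
  intros Hx Hx' Hw. induction l; simpl.
  - replace (Cminus 0 0) with (RtoC 0) by Ceq.
    rewrite Cmod_0.
    pose proof (Cmod_ge_0 (Cminus x x')).
    lra.
  - replace (Cminus (Cplus (eval_monomial n a x w) (eval_list n l x w)) (Cplus (eval_monomial n a x' w) (eval_list n l x' w)))
      with (Cplus (Cminus (eval_monomial n a x w) (eval_monomial n a x' w)) (Cminus (eval_list n l x w) (eval_list n l x' w))) by Ceq.
    eapply Rle_trans. apply Cmod_triangle.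
    assert (Cmod (Cminus (eval_monomial n a x w) (eval_monomial n a x' w)) <= xlip_monomial a * Cmod (Cminus x x')).
    { destruct a as [[c a] b]. unfold eval_monomial, xlip_monomial.
      replace (Cminus (Cmult c (Cmult (pow_n x a) (cprod n (fun j => pow_n (w j) (b j)))))
         (Cmult c (Cmult (pow_n x' a) (cprod n (fun j => pow_n (w j) (b j))))))
      with (Cmult c (Cmult (Cminus (pow_n x a) (pow_n x' a)) (cprod n (fun j => pow_n (w j) (b j))))) by Ceq.
      rewrite !Cmod_mult.
      assert (Hp := Cmod_cprod_pow n w b 1 ltac:(lra) Hw). rewrite pow1 in Hp.
      assert (Hd := pow_n_lip x x' 2 a Hx Hx').
      assert (0 <= Cmod c) by apply Cmod_ge_0.
      assert (0 <= Cmod (cprod n (fun j => pow_n (w j) (b j)))) by apply Cmod_ge_0.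
      assert (0 <= Cmod (Cminus (pow_n x a) (pow_n x' a))) by apply Cmod_ge_0.
      assert (0 <= INR a * 2 ^ a * Cmod (Cminus x x')).
      { repeat apply Rmult_le_pos; try apply Cmod_ge_0; try apply pow_le; try lra; apply pos_INR. }
      assert (Cmod (Cminus (pow_n x a) (pow_n x' a)) * Cmod (cprod n (fun j => pow_n (w j) (b j))) <= INR a * 2 ^ a * Cmod (Cminus x x')).
      { eapply Rle_trans. apply Rmult_le_compat_l; [auto| apply Hp]. lra. }
      replace (Cmod c * INR a * 2 ^ a * Cmod (Cminus x x')) with (Cmod c * (INR a * 2 ^ a * Cmod (Cminus x x'))) by ring.
      apply Rmult_le_compat_l; auto. }
    lra.
Qed.

Lemma cprod_ext n b (y y' : nat -> C) : (forall j, (j < n)%nat -> y j = y' j) ->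
  cprod n (fun j => pow_n (y j) (b j)) = cprod n (fun j => pow_n (y' j) (b j)).
Proof.
  induction n; simpl; intros H; auto. rewrite IHn by (intros; apply H; lia). rewrite H by lia. auto.
Qed.

Lemma eval_list_ext n l x y y' :
  (forall j, (j < n)%nat -> y j = y' j) -> eval_list n l x y = eval_list n l x y'.
Proof.
  intros H. induction l as [|[[c a] b] l IHl]; simpl; auto.
  rewrite IHl. unfold eval_monomial. rewrite (cprod_ext n b y y' H). auto.
Qed.

Lemma cprod_zero n b : (1 <= nsum n b)%nat -> cprod n (fun j => pow_n (RtoC 0) (b j)) = RtoC 0.
Proof.
  induction n; simpl; intros H; [lia|].
  destruct (b n) eqn:E.
  - rewrite Nat.add_0_r in H. rewrite IHn by auto. Ceq.
  - rewrite pow_n_S. Ceq.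
Qed.

Lemma eval_list_zero n l x : (forall m, In m l -> (2 <= nsum n (snd m))%nat) ->
  eval_list n l x (fun _ => RtoC 0) = RtoC 0.
Proof.
  induction l; simpl; intros H; auto.
  rewrite IHl by (intros; apply H; auto). destruct a as [[c a0] b]. unfold eval_monomial.
  rewrite cprod_zero. Ceq. specialize (H (c,a0,b) (or_introl eq_refl)). simpl in H. lia.
Qed.

(* The size of G: rho * Gsize bounds the Lipschitz constant of G on the ball
   of radius rho <= 1. *)
Definition Gsize n (G : polymap) := rsum n (fun k => ylip_list n 1 (G k)).

Lemma Gsize_nonneg n G : 0 <= Gsize n G.
Proof. apply rsum_nonneg; intros; apply ylip_list_nonneg; lra. Qed.

Lemma G_small n G rho X u v : in_ideal_y2 n G -> 0 < rho <= 1 -> Cmod X <= 2 ->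
  vnorm n u <= rho -> vnorm n v <= rho ->
  l1norm n (vsub (eval_poly n G X u) (eval_poly n G X v)) <= rho * Gsize n G * vnorm n (vsub u v).
Proof.
  intros HG Hrho HX Hu Hv. pose proof (poly_lip_y n G X u v rho ltac:(lra) HX Hu Hv) as Hlip.
  assert (rsum n (fun k => ylip_list n rho (G k)) <= rho ^ 2 * Gsize n G).
  { unfold Gsize. rewrite <- rsum_scal. apply rsum_le; intros k Hk.
    apply ylip_list_small; [lra|]. intros m Hm. apply (HG k m Hk Hm). }
  pose proof (vnorm_nonneg n (vsub u v)).
  apply Rmult_le_reg_l with rho; [lra|]. eapply Rle_trans; [apply Hlip|].
  replace (rho * (rho * Gsize n G * vnorm n (vsub u v)))
    with ((rho ^ 2 * Gsize n G) * vnorm n (vsub u v)) by ring.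
  apply Rmult_le_compat_r; auto.
Qed.

Lemma l1norm_G_small n G rho X w : in_ideal_y2 n G -> 0 < rho <= 1 -> Cmod X <= 2 ->
  vnorm n w <= rho -> l1norm n (eval_poly n G X w) <= rho * Gsize n G * vnorm n w.
Proof.
  intros HG Hrho HX Hw.
  rewrite <- (l1norm_ext n (vsub (eval_poly n G X w) (eval_poly n G X (fun _ => RtoC 0)))).
  - rewrite <- (vnorm_zero_sub n w). apply G_small; auto.
    rewrite vnorm_sqnorm. unfold sqnorm.
    rewrite (rsum_ext _ _ (fun _ => 0)) by (intros; rewrite Cmod_0; ring).
    rewrite rsum_zero, sqrt_0. lra.
  - intros k Hk. unfold vsub. rewrite (eval_poly_eval_list n G X (fun _ => RtoC 0)), eval_list_zero.
    Ceq. intros m Hm. apply (HG k m Hk Hm).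
Qed.

Definition neglog (x : C) : C := Copp (Clog x).

Lemma Carg_bound z : Rabs (Carg z) <= PI.
Proof.
  unfold Carg. pose proof (atan_bound (Im z / (Cmod z + Re z))).
  unfold Rabs; destruct Rcase_abs; lra.
Qed.

Lemma ln2_lt_1 : ln 2 < 1.
Proof.
  rewrite <- ln_exp with 1. apply ln_increasing; [lra|].
  pose proof (exp_ineq1 1 ltac:(lra)). lra.
Qed.

Lemma slit_pos x : slit_disc2 x -> 0 < Cmod x.
Proof. intros [H1 H2]. apply Cmod_gt_0. intros ->. apply H2. simpl; lra. Qed.

(* On the slit disc ln|x| < ln 2 < 1, i.e. Re lambda > -1. *)
Lemma slit_ln x : slit_disc2 x -> ln (Cmod x) < 1.
Proof.
  intros Hx. pose proof (slit_pos x Hx). destruct Hx as [H1 _].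
  eapply Rlt_trans. apply ln_increasing; eauto. apply ln2_lt_1.
Qed.

(** * The energy inequality *)

(* With lambda = l + i m,
   W + i Iw = <A d, d>, gr + i gi = <g, d> and Q = |d|^2, the quantity
   Re (lambda (<A d,d> + <g,d>)) = l (W + gr) - m (Iw + gi)
   lies between (-l d1 - s) Q and (-l d0 + s) Q, where s = d1 + pi (K + eps)
   absorbs the imaginary part and the case l < 0 (note -l < 1). *)
Lemma energy_real l m Q W Iw gr gi K eps d0 d1 :
  0 <= Q -> -l < 1 -> Rabs m <= PI -> 0 < d0 -> 0 < d1 -> 0 < eps -> 0 <= K ->
  Rabs W <= K * Q -> Rabs Iw <= K * Q -> Rabs gr <= eps * Q -> Rabs gi <= eps * Q ->
  (0 < Q -> (-d1 + eps) * Q < W /\ W < (-d0 - eps) * Q) ->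
  l * (W + gr) - m * (Iw + gi) <= (- l * d0 + (d1 + PI * K + PI * eps)) * Q /\
  (- l * d1 - (d1 + PI * K + PI * eps)) * Q <= l * (W + gr) - m * (Iw + gi).
Proof.
  intros HQ Hl Hm Hd0 Hd1 He HK HW HI Hgr Hgi HA.
  assert (HPI : 0 < PI) by apply PI_RGT_0.
  assert (Him : Rabs (m * (Iw + gi)) <= PI * ((K + eps) * Q)).
  { rewrite Rabs_mult. apply Rmult_le_compat; try apply Rabs_pos; auto.
    eapply Rle_trans; [apply Rabs_triang|]; lra. }
  apply Rabs_le_between in Him.
  destruct (Req_dec Q 0) as [HQ0|HQ0].
  - subst Q. apply Rabs_le_between in HW. apply Rabs_le_between in Hgr.
    assert (W = 0) by nra. assert (gr = 0) by nra. subst. nra.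
  - destruct (HA ltac:(lra)) as [HW1 HW2]. apply Rabs_le_between in Hgr.
    destruct (Rle_lt_dec 0 l); split; nra.
Qed.

Definition dissipative n (A : nat -> nat -> C) (delta0 delta1 eps : R) : Prop :=
  forall y : nat -> C, vnorm n y <> 0 ->
    (- delta1 + eps) * (vnorm n y) ^ 2 < Re (cinner n (matvec n A y) y) /\
    Re (cinner n (matvec n A y) y) < (- delta0 - eps) * (vnorm n y) ^ 2.

(* The slack s of the energy inequality; it depends only on A, delta1, eps. *)
Definition slack n (A : nat -> nat -> C) (delta1 eps : R) := delta1 + PI * matnorm n A + PI * eps.

Lemma slack_pos n A delta1 eps : 0 < delta1 -> 0 < eps -> 0 < slack n A delta1 eps.
Proof. intros. unfold slack. pose proof (matnorm_nonneg n A). pose proof PI_RGT_0. nra. Qed.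

Lemma energy_bound n A delta0 delta1 eps x d g :
  0 < delta0 -> 0 < delta1 -> 0 < eps -> dissipative n A delta0 delta1 eps -> slit_disc2 x ->
  Cmod (cinner n g d) <= eps * sqnorm n d ->
  let E := Re (cinner n (fun k => Cmult (neglog x) (Cplus (matvec n A d k) (g k))) d) in
  E <= (ln (Cmod x) * delta0 + slack n A delta1 eps) * sqnorm n d /\
  (ln (Cmod x) * delta1 - slack n A delta1 eps) * sqnorm n d <= E.
Proof.
  intros Hd0 Hd1 He HA Hx Hg E. unfold E.
  rewrite cinner_lin, re_mult, re_plus, im_plus.
  change (Re (neglog x)) with (- ln (Cmod x)). change (Im (neglog x)) with (- Carg x).
  set (w := cinner n (matvec n A d) d). set (gi := cinner n g d).
  assert (Hw := Cmod_cinner_matvec n A d). fold w in Hw.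
  assert (HQ := sqnorm_nonneg n d).
  destruct (energy_real (- ln (Cmod x)) (- Carg x) (sqnorm n d) (Re w) (Im w) (Re gi) (Im gi)
              (matnorm n A) eps delta0 delta1) as [H1 H2]; auto.
  - rewrite Ropp_involutive. apply slit_ln; auto.
  - rewrite Rabs_Ropp. apply Carg_bound.
  - apply matnorm_nonneg.
  - eapply Rle_trans; [apply re_le_Cmod| auto].
  - eapply Rle_trans; [apply im_le_Cmod| auto].
  - eapply Rle_trans; [apply re_le_Cmod| auto].
  - eapply Rle_trans; [apply im_le_Cmod| auto].
  - intros HQp. assert (Hv : vnorm n d <> 0).
    { rewrite vnorm_sqnorm. intros H0. apply sqrt_eq_0 in H0; lra. }
    destruct (HA d Hv) as [A1 A2]. rewrite vnorm_sq in A1, A2. split; auto.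
  - unfold slack. split; nra.
Qed.

(* clamp t is the projection of t onto [0,1]; it lets us extend the path
   x^(1-t) continuously to all t in R. *)
Definition clamp (t : R) := Rmax 0 (Rmin 1 t).

Lemma clamp_bound t : 0 <= clamp t <= 1.
Proof. unfold clamp, Rmax, Rmin. repeat destruct Rle_dec; lra. Qed.

Lemma clamp_id t : 0 <= t <= 1 -> clamp t = t.
Proof. unfold clamp, Rmax, Rmin. repeat destruct Rle_dec; lra. Qed.

Lemma clamp_lip t s : Rabs (clamp t - clamp s) <= Rabs (t - s).
Proof. unfold clamp, Rmax, Rmin, Rabs. repeat destruct Rle_dec; repeat destruct Rcase_abs; lra. Qed.

Lemma clamp_cont t : continuity_pt clamp t.
Proof.
  intros e He. exists e. split; auto. intros s [_ Hs]. simpl in *. unfold R_dist in *.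
  eapply Rle_lt_trans; [apply clamp_lip| auto].
Qed.

Definition xcurve (x : C) (t : R) : C := cpow_real x (1 - clamp t).

Lemma Cmod_Cexp z : Cmod (Cexp z) = exp (Re z).
Proof.
  unfold Cexp, Cmod. cbn [fst snd].
  replace ((exp (Re z) * cos (Im z)) ^ 2 + (exp (Re z) * sin (Im z)) ^ 2) with (exp (Re z) ^ 2)
    by (pose proof (sin2_cos2 (Im z)); unfold Rsqr in *; simpl; nra).
  apply sqrt_pow2. left; apply exp_pos.
Qed.

Lemma xcurve_bound x t : slit_disc2 x -> Cmod (xcurve x t) <= 2.
Proof.
  intros Hx. unfold xcurve, cpow_real. rewrite Cmod_Cexp. simpl.
  pose proof (clamp_bound t). pose proof (slit_pos x Hx). destruct Hx as [H2 _].
  assert (ln (Cmod x) < ln 2) by (apply ln_increasing; auto).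
  replace ((1 - clamp t) * ln (Cmod x) - 0 * Carg x) with ((1 - clamp t) * ln (Cmod x)) by ring.
  rewrite <- (exp_ln 2) by lra.
  assert (Hle : (1 - clamp t) * ln (Cmod x) <= ln 2).
  { destruct (Rle_lt_dec 0 (ln (Cmod x))). assert (0 < ln 2) by (rewrite <- ln_1; apply ln_increasing; lra). nra.
    assert (0 < ln 2) by (rewrite <- ln_1; apply ln_increasing; lra). nra. }
  destruct Hle as [Hlt|Heq]. left; apply exp_increasing; auto. rewrite Heq; lra.
Qed.

Lemma cpow_bound x t : slit_disc2 x -> 0 <= t <= 1 -> Cmod (cpow_real x (1 - t)) <= 2.
Proof.
  intros Hx Ht. pose proof (xcurve_bound x t Hx). unfold xcurve in H. rewrite clamp_id in H; auto.
Qed.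

Lemma smooth_cont (f : R -> R) t : ex_derive f t -> continuity_pt f t.
Proof.
  intros H. apply continuity_pt_filterlim. apply (ex_derive_continuous (V := R_NormedModule) f t H).
Qed.

Lemma contpt_ext (f g : R -> R) t : (forall s, f s = g s) -> continuity_pt f t -> continuity_pt g t.
Proof.
  intros H Hf. apply continuity_pt_filterlim. apply continuity_pt_filterlim in Hf.
  rewrite <- H. eapply filterlim_ext; eauto.
Qed.

Lemma xcurve_fst_cont x t : continuity_pt (fun s => fst (xcurve x s)) t.
Proof.
  apply (contpt_ext (comp (fun th => exp ((1 - th) * ln (Cmod x) - 0 * Carg x) * cos ((1 - th) * Carg x + 0 * ln (Cmod x))) clamp)).
  { intros s. unfold comp, xcurve, cpow_real, Cexp. simpl. reflexivity. }
  apply continuity_pt_comp. apply clamp_cont. apply smooth_cont. auto_derive. auto.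
Qed.

Lemma xcurve_snd_cont x t : continuity_pt (fun s => snd (xcurve x s)) t.
Proof.
  apply (contpt_ext (comp (fun th => exp ((1 - th) * ln (Cmod x) - 0 * Carg x) * sin ((1 - th) * Carg x + 0 * ln (Cmod x))) clamp)).
  { intros s. unfold comp, xcurve, cpow_real, Cexp. simpl. reflexivity. }
  apply continuity_pt_comp. apply clamp_cont. apply smooth_cont. auto_derive. auto.
Qed.

Lemma xcurve_cont x t : forall e, 0 < e -> exists d, 0 < d /\
  forall s, Rabs (s - t) < d -> Cmod (Cminus (xcurve x s) (xcurve x t)) < e.
Proof.
  intros e He.
  destruct (xcurve_fst_cont x t (e/2) ltac:(lra)) as [d1 [Hd1 H1]].
  destruct (xcurve_snd_cont x t (e/2) ltac:(lra)) as [d2 [Hd2 H2]].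
  exists (Rmin d1 d2). split; [apply Rmin_pos; auto|]. intros s Hs.
  pose proof (Rmin_l d1 d2). pose proof (Rmin_r d1 d2).
  eapply Rle_lt_trans. apply Cmod_le_sum.
  assert (A1 : Rabs (fst (xcurve x s) - fst (xcurve x t)) < e/2).
  { destruct (Req_dec s t) as [->|Hst]; [rewrite Rminus_diag, Rabs_R0; lra|].
    apply (H1 s). split; [split; [exact I| auto]|]. simpl. unfold R_dist. lra. }
  assert (A2 : Rabs (snd (xcurve x s) - snd (xcurve x t)) < e/2).
  { destruct (Req_dec s t) as [->|Hst]; [rewrite Rminus_diag, Rabs_R0; lra|].
    apply (H2 s). split; [split; [exact I| auto]|]. simpl. unfold R_dist. lra. }
  change (Rabs (fst (xcurve x s) - fst (xcurve x t)) + Rabs (snd (xcurve x s) - snd (xcurve x t)) < e).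
  lra.
Qed.

Lemma is_derive_C_fst (f : R -> C) t (l : C) :
  is_derive f t l -> is_derive (fun s => fst (f s)) t (fst l).
Proof.
  intros H. unfold is_derive in *.
  apply (@filterdiff_comp R_AbsRing R_NormedModule C_R_NormedModule R_NormedModule _ _
           f (fun z : C_R_NormedModule => fst z) (fun y => scal y l) (fun z : C_R_NormedModule => fst z) H).
  apply filterdiff_linear. apply (@is_linear_fst R_AbsRing R_NormedModule R_NormedModule).
Qed.

Lemma is_derive_C_snd (f : R -> C) t (l : C) :
  is_derive f t l -> is_derive (fun s => snd (f s)) t (snd l).
Proof.
  intros H. unfold is_derive in *.
  apply (@filterdiff_comp R_AbsRing R_NormedModule C_R_NormedModule R_NormedModule _ _
           f (fun z : C_R_NormedModule => snd z) (fun y => scal y l) (fun z : C_R_NormedModule => snd z) H).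
  apply filterdiff_linear. apply (@is_linear_snd R_AbsRing R_NormedModule R_NormedModule).
Qed.

Lemma is_derive_C_pair (f g : R -> R) t a b :
  is_derive f t a -> is_derive g t b -> is_derive (fun s => (f s, g s) : C) t ((a, b) : C).
Proof.
  intros Hf Hg. unfold is_derive in *.
  apply (@filterdiff_comp'_2 R_AbsRing R_NormedModule R_NormedModule R_NormedModule C_R_NormedModule
           f g (fun u v => (u, v) : C_R_NormedModule) t (fun y => scal y a) (fun y => scal y b)
           (fun u v => (u,v) : C_R_NormedModule) Hf Hg).
  apply filterdiff_linear.
  apply (@is_linear_ext _ _ _ (fun t => t)). intros [u v]; reflexivity. apply is_linear_id.
Qed.

Lemma is_derive_rsum n (f : R -> nat -> R) t (df : nat -> R) :
  (forall k, (k < n)%nat -> is_derive (fun s => f s k) t (df k)) ->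
  is_derive (fun s => rsum n (f s)) t (rsum n df).
Proof.
  induction n; intros H; simpl.
  - apply (is_derive_const 0).
  - apply (@is_derive_plus R_AbsRing R_NormedModule). apply IHn; intros; apply H; lia. apply H; lia.
Qed.

Lemma is_derive_val (f : R -> R) t l l' : is_derive f t l -> l = l' -> is_derive f t l'.
Proof. intros H ->; auto. Qed.

Lemma is_derive_valC (f : R -> C) t (l l' : C) : is_derive f t l -> l = l' -> is_derive f t l'.
Proof. intros H ->; auto. Qed.

Lemma is_derive_sq (f : R -> R) t a : is_derive f t a -> is_derive (fun s => f s ^ 2) t (2 * a * f t).
Proof. intros H. eapply is_derive_val. apply (is_derive_pow f 2 t a H). simpl; ring. Qed.

Lemma is_derive_sqnorm n (y : R -> nat -> C) (Y : nat -> C) t :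
  (forall k, (k < n)%nat -> is_derive (fun s => y s k) t (Y k)) ->
  is_derive (fun s => sqnorm n (y s)) t (2 * Re (cinner n Y (y t))).
Proof.
  intros H. unfold sqnorm, cinner. rewrite re_csum, <- rsum_scal.
  apply is_derive_rsum. intros k Hk.
  apply (is_derive_ext (fun s => fst (y s k) ^ 2 + snd (y s k) ^ 2)).
  { intros s. rewrite Cmod2_alt. reflexivity. }
  eapply is_derive_val.
  apply (@is_derive_plus R_AbsRing R_NormedModule); apply is_derive_sq.
  apply (is_derive_C_fst (fun s => y s k)); auto. apply (is_derive_C_snd (fun s => y s k)); auto.
  destruct (Y k), (y t k). simpl. unfold plus; simpl. ring.
Qed.

Lemma is_derive_contpt (f : R -> R) t l : is_derive f t l -> continuity_pt f t.
Proof.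
  intros H. apply continuity_pt_filterlim. apply (ex_derive_continuous f t). exists l; auto.
Qed.

Lemma gronwall (f df : R -> R) k :
  (forall t, 0 <= t <= 1 -> is_derive f t (df t)) ->
  (forall t, 0 <= t <= 1 -> df t <= 2 * k * f t) ->
  forall t, 0 <= t <= 1 -> f t <= exp (2 * k * t) * f 0.
Proof.
  intros Hd Hle t Ht.
  set (h := fun s => exp (- (2 * k) * s) * f s).
  assert (Hh : forall s, 0 <= s <= 1 -> is_derive h s (exp (- (2 * k) * s) * (df s - 2 * k * f s))).
  { intros s Hs. unfold h. eapply is_derive_val.
    apply (@is_derive_mult R_AbsRing). 2: apply Hd; auto.
    apply (is_derive_comp exp (fun s => - (2*k) * s)). apply is_derive_exp.
    eapply is_derive_val. apply is_derive_scal. apply (is_derive_id s). simpl. reflexivity.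
    intros; apply Rmult_comm.
    unfold plus, mult, scal; simpl. unfold mult, plus; simpl. unfold one; simpl; ring. }
  destruct (MVT_gen h 0 t (fun s => exp (- (2 * k) * s) * (df s - 2 * k * f s))) as [c [Hc Heq]].
  { intros s Hs. rewrite Rmin_left in Hs by lra. rewrite Rmax_right in Hs by lra. apply Hh; lra. }
  { intros s Hs. rewrite Rmin_left in Hs by lra. rewrite Rmax_right in Hs by lra. eapply is_derive_contpt, Hh; lra. }
  rewrite Rmin_left in Hc by lra. rewrite Rmax_right in Hc by lra.
  assert (exp (- (2 * k) * c) * (df c - 2 * k * f c) <= 0).
  { assert (0 < exp (- (2 * k) * c)) by apply exp_pos. assert (df c <= 2 * k * f c) by (apply Hle; lra). nra. }
  assert (h t <= h 0) by nra. unfold h in H0. rewrite Rmult_0_r, exp_0, Rmult_1_l in H0.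
  assert (exp (2 * k * t) * exp (- (2 * k) * t) = 1).
  { rewrite <- exp_plus. replace (2 * k * t + - (2 * k) * t) with 0 by ring. apply exp_0. }
  assert (0 < exp (2 * k * t)) by apply exp_pos.
  replace (f t) with (exp (2 * k * t) * (exp (- (2 * k) * t) * f t)) by (rewrite <- Rmult_assoc, H1; ring).
  apply Rmult_le_compat_l; lra.
Qed.

(* exp k * sqrt Q = sqrt (exp (2k) Q): turns Gronwall bounds on |d|^2 into
   bounds on |d|. *)
Lemma sqrt_exp2 k Q : 0 <= Q -> sqrt (exp (2 * k) * Q) = exp k * sqrt Q.
Proof.
  intros HQ. rewrite sqrt_mult_alt by (left; apply exp_pos).
  replace (exp (2 * k)) with (exp k ^ 2) by (simpl; rewrite Rmult_1_r, <- exp_plus; f_equal; ring).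
  rewrite sqrt_pow2 by (left; apply exp_pos). auto.
Qed.

Definition cont_all (f : R -> R) := forall t, continuous f t.

Lemma cont_all_exRInt f a b : cont_all f -> ex_RInt f a b.
Proof. intros H. apply (@ex_RInt_continuous R_CompleteNormedModule). intros; apply H. Qed.

Lemma cont_all_minus f g : cont_all f -> cont_all g -> cont_all (fun s => f s - g s).
Proof. intros Hf Hg t. apply (continuous_minus (V := R_NormedModule)); auto. Qed.

Lemma contpt_of_eps (f : R -> R) t : (forall e, 0 < e -> exists d, 0 < d /\ forall s, Rabs (s - t) < d -> Rabs (f s - f t) < e) ->
  continuous f t.
Proof.
  intros H. apply continuity_pt_filterlim. intros e He. destruct (H e He) as [d [Hd Hs]].
  exists d; split; auto. intros s [_ Hst]. apply Hs. exact Hst.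
Qed.

Lemma RInt0 (f : R -> R) : RInt f 0 0 = 0.
Proof. apply (RInt_point (V := R_CompleteNormedModule)). Qed.

Lemma RInt_sub (f g : R -> R) t : cont_all f -> cont_all g -> RInt f 0 t - RInt g 0 t = RInt (fun s => f s - g s) 0 t.
Proof.
  intros Hf Hg.
  symmetry.
  apply (RInt_minus (V := R_CompleteNormedModule)); apply cont_all_exRInt; auto.
Qed.

Lemma int_lip (f : R -> R) B : cont_all f -> (forall s, Rabs (f s) <= B) ->
  forall s t, Rabs (RInt f 0 s - RInt f 0 t) <= B * Rabs (s - t).
Proof.
  intros Hc Hb s t.
  assert (E : RInt f 0 s - RInt f 0 t = RInt f t s).
  { rewrite <- (RInt_Chasles f 0 t s) by (apply cont_all_exRInt; auto). unfold plus; simpl. ring. }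
  rewrite E. destruct (Rle_lt_dec t s).
  - rewrite (Rabs_right (s - t)) by lra.
    rewrite Rmult_comm.
    apply abs_RInt_le_const; auto.
    apply cont_all_exRInt; auto.
  - rewrite <- opp_RInt_swap by (apply cont_all_exRInt; auto). unfold opp; simpl. rewrite Rabs_Ropp.
    rewrite (Rabs_left (s - t)) by lra.
    replace (- (s - t)) with (t - s) by ring.
    rewrite Rmult_comm.
    apply abs_RInt_le_const; [lra| |auto]. apply cont_all_exRInt; auto.
Qed.

Lemma int_deriv (f : R -> R) (c : R) t : cont_all f -> is_derive (fun s => c + RInt f 0 s) t (f t).
Proof.
  intros Hc. eapply is_derive_val. apply (@is_derive_plus R_AbsRing R_NormedModule).
  apply is_derive_const. apply (is_derive_RInt f (RInt f 0) 0 t).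
  apply filter_forall.
  intros b.
  apply (@RInt_correct R_CompleteNormedModule).
  apply cont_all_exRInt; auto.
  apply Hc.
  unfold plus, zero; simpl; ring.
Qed.

Lemma int_exp_bound (h : R -> R) C K t : cont_all h -> 0 < K -> 0 <= C ->
  (forall s, Rabs (h s) <= C * exp (2 * K * Rabs s)) -> Rabs (RInt h 0 t) <= C * exp (2 * K * Rabs t) / (2 * K).
Proof.
  intros Hc HK HC Hb. destruct (Rle_lt_dec 0 t) as [Ht|Ht].
  - assert (Hg : is_RInt (fun s => C * exp (2 * K * s)) 0 t (minus (C * exp (2 * K * t) / (2 * K)) (C * exp (2 * K * 0) / (2 * K)))).
    { apply (is_RInt_derive (V := R_CompleteNormedModule) (fun s => C * exp (2 * K * s) / (2 * K))).
      - intros s _. auto_derive. auto. field. lra.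
      - intros s _. apply (ex_derive_continuous (V := R_NormedModule)). auto_derive. auto. }
    assert (Hb' : forall s, 0 <= s <= t -> norm (h s) <= C * exp (2 * K * s)).
    { intros s Hs. change (Rabs (h s) <= C * exp (2 * K * s)). rewrite <- (Rabs_right s) at 2 by lra. apply Hb. }
    assert (H := norm_RInt_le h (fun s => C * exp (2 * K * s)) 0 t _ _ Ht Hb'
      (RInt_correct h 0 t (cont_all_exRInt h 0 t Hc)) Hg).
    change (Rabs (RInt h 0 t) <= C * exp (2 * K * Rabs t) / (2 * K)).
    change (Rabs (RInt h 0 t) <= (C * exp (2 * K * t) / (2 * K)) - (C * exp (2 * K * 0) / (2 * K))) in H.
    rewrite (Rabs_right t) by lra. rewrite Rmult_0_r, exp_0 in H.
    assert (0 <= C * 1 / (2 * K)) by (apply Rmult_le_pos; [lra| left; apply Rinv_0_lt_compat; lra]).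
    lra.
  - assert (Hg : is_RInt (fun s => C * exp (- (2 * K) * s)) t 0 (minus (- C * exp (- (2 * K) * 0) / (2 * K)) (- C * exp (- (2 * K) * t) / (2 * K)))).
    { apply (is_RInt_derive (V := R_CompleteNormedModule) (fun s => - C * exp (- (2 * K) * s) / (2 * K))).
      - intros s _. auto_derive. auto. field. lra.
      - intros s _. apply (ex_derive_continuous (V := R_NormedModule)). auto_derive. auto. }
    assert (Hb' : forall s, t <= s <= 0 -> norm (h s) <= C * exp (- (2 * K) * s)).
    { intros s Hs. change (Rabs (h s) <= C * exp (- (2 * K) * s)). eapply Rle_trans. apply Hb.
      rewrite (Rabs_left1 s) by lra. replace (2 * K * - s) with (- (2 * K) * s) by ring. lra. }
    assert (H := norm_RInt_le h (fun s => C * exp (- (2 * K) * s)) t 0 _ _ (ltac:(lra)) Hb'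
      (RInt_correct h t 0 (cont_all_exRInt h t 0 Hc)) Hg).
    rewrite <- opp_RInt_swap by (apply cont_all_exRInt; auto).
    change (Rabs (- RInt h t 0) <= C * exp (2 * K * Rabs t) / (2 * K)). rewrite Rabs_Ropp.
    change (Rabs (RInt h t 0) <= (- C * exp (- (2 * K) * 0) / (2 * K)) - (- C * exp (- (2 * K) * t) / (2 * K))) in H.
    rewrite (Rabs_left t) by lra. rewrite Rmult_0_r, exp_0 in H.
    replace (- C * exp (- (2 * K) * t) / (2 * K)) with (- (C * exp (2 * K * - t) / (2 * K))) in H
      by (replace (2 * K * - t) with (- (2 * K) * t) by ring; field; lra).
    assert (0 <= C * 1 / (2 * K)) by (apply Rmult_le_pos; [lra| left; apply Rinv_0_lt_compat; lra]).
    replace (- C * 1 / (2 * K)) with (- (C * 1 / (2 * K))) in H by (field; lra). lra.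
Qed.

Lemma geom_partial (a : nat -> R) E : 0 <= E -> (forall m, Rabs (a (S m) - a m) <= E * (/2)^m) ->
  forall m j, Rabs (a (j + m)%nat - a m) <= 2 * E * (/2)^m * (1 - (/2)^j).
Proof.
  intros HE H m j. induction j; simpl.
  - rewrite Rminus_diag, Rabs_R0. lra.
  - replace (a (S (j + m)) - a m) with ((a (S (j + m)) - a (j + m)%nat) + (a (j + m)%nat - a m)) by ring.
    eapply Rle_trans. apply Rabs_triang. pose proof (H (j + m)%nat). rewrite pow_add in H0.
    assert (0 <= (/2)^j) by (apply pow_le; lra). assert (0 <= (/2)^m) by (apply pow_le; lra).
    assert (0 <= E * (/2)^m) by (apply Rmult_le_pos; auto).
    nra.
Qed.

Lemma geom_limit (a : nat -> R) E : 0 <= E -> (forall m, Rabs (a (S m) - a m) <= E * (/2)^m) ->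
  exists l, Un_cv a l /\ forall m, Rabs (l - a m) <= 2 * E * (/2)^m.
Proof.
  intros HE H.
  assert (Hp : forall m p, (m <= p)%nat -> Rabs (a p - a m) <= 2 * E * (/2)^m).
  { intros m p Hmp. replace p with ((p - m) + m)%nat by lia. eapply Rle_trans; [apply (geom_partial a E HE H)|].
    assert (0 <= (/2)^(p-m)) by (apply pow_le; lra). assert (0 <= (/2)^m) by (apply pow_le; lra).
    assert (0 <= 2 * E * (/2)^m) by (apply Rmult_le_pos; lra). nra. }
  assert (Hc : Cauchy_crit a).
  { intros eps Heps. destruct (pow_lt_1_zero (/2) ltac:(rewrite Rabs_right; lra) (eps / (4 * E + 1)) ltac:(apply Rdiv_lt_0_compat; lra)) as [N HN].
    exists N. intros p q Hp' Hq'. unfold Rdist.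
    assert (HN' := HN N (le_n N)). rewrite Rabs_right in HN' by (apply Rle_ge, pow_le; lra).
    replace (a p - a q) with ((a p - a N) - (a q - a N)) by ring.
    eapply Rle_lt_trans. apply Rabs_triang. rewrite Rabs_Ropp.
    pose proof (Hp N p Hp'). pose proof (Hp N q Hq').
    assert (4 * E * (/2)^N < eps).
    { apply Rmult_lt_reg_r with (/ (4 * E + 1)). apply Rinv_0_lt_compat; lra.
      assert (0 <= (/2)^N) by (apply pow_le; lra).
      assert (4 * E * (/ 2) ^ N * / (4 * E + 1) <= (/2)^N).
      { apply Rmult_le_reg_r with (4 * E + 1). lra. rewrite Rmult_assoc, Rinv_l by lra. nra. }
      unfold Rdiv in HN'. lra. }
    lra. }
  destruct (Rcomplete.R_complete a Hc) as [l Hl]. exists l. split; auto.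
  intros m. apply le_epsilon. intros eta Heta.
  destruct (Hl eta Heta) as [N HN]. specialize (HN (max N m) ltac:(lia)). unfold R_dist in HN.
  replace (l - a m) with ((a (max N m) - a m) - (a (max N m) - l)) by ring.
  eapply Rle_trans.
  apply Rabs_triang.
  rewrite Rabs_Ropp.
  pose proof (Hp m (max N m) ltac:(lia)).
  lra.
Qed.

Lemma lim_real (a : nat -> R) l : Un_cv a l -> real (Lim_seq a) = l.
Proof. intros H. apply is_lim_seq_Reals in H. rewrite (is_lim_seq_unique a l H). reflexivity. Qed.

Lemma Un_cv_shift (a : nat -> R) l : Un_cv a l -> Un_cv (fun m => a (S m)) l.
Proof.
  intros H.
  apply is_lim_seq_Reals.
  apply is_lim_seq_Reals in H.
  apply -> (is_lim_seq_incr_1 a l).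
  auto.
Qed.

(** * Radial retraction onto the l1-ball *)

Definition radial_scale (rho a : R) : R := if Rle_dec a rho then 1 else rho / a.

Lemma radial_scale_bound rho a : 0 < rho -> 0 < radial_scale rho a <= 1.
Proof.
  intros Hrho. unfold radial_scale. destruct Rle_dec; [lra|].
  split; [apply Rdiv_lt_0_compat; lra|].
  apply Rmult_le_reg_r with a; [lra|]. field_simplify; lra.
Qed.

(* The key estimate making the retraction 2-Lipschitz:
   |phi(a) - phi(b)| b <= |a - b|. *)
Lemma radial_scale_diff rho a b : 0 < rho -> 0 <= a -> 0 <= b ->
  Rabs (radial_scale rho a - radial_scale rho b) * b <= Rabs (a - b).
Proof.
  intros Hrho Ha Hb. unfold radial_scale.
  destruct (Rle_dec a rho), (Rle_dec b rho).
  - rewrite Rminus_diag, Rabs_R0. pose proof (Rabs_pos (a - b)). lra.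
  - assert (Hs : rho / b <= 1) by (apply Rmult_le_reg_r with b; [lra|]; field_simplify; lra).
    rewrite Rabs_right by lra.
    replace ((1 - rho / b) * b) with (b - rho) by (field; lra).
    apply Rle_trans with (- (a - b)); [lra|]. rewrite <- Rabs_Ropp. apply Rle_abs.
  - assert (Hs : rho / a <= 1) by (apply Rmult_le_reg_r with a; [lra|]; field_simplify; lra).
    rewrite Rabs_left1 by lra.
    apply Rle_trans with ((1 - rho / a) * a).
    + replace (- (rho / a - 1) * b) with ((1 - rho / a) * b) by ring.
      apply Rmult_le_compat_l; lra.
    + replace ((1 - rho / a) * a) with (a - rho) by (field; lra).
      apply Rle_trans with (a - b); [lra| apply Rle_abs].
  - replace (rho / a - rho / b) with (rho / a * ((b - a) / b)) by (field; lra).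
    rewrite Rabs_mult, (Rabs_right (rho / a)) by (apply Rle_ge, Rlt_le, Rdiv_lt_0_compat; lra).
    unfold Rdiv at 2.
    rewrite Rabs_mult, (Rabs_right (/ b)) by (apply Rle_ge, Rlt_le, Rinv_0_lt_compat; lra).
    replace (rho / a * (Rabs (b - a) * / b) * b) with (rho / a * Rabs (a - b))
      by (rewrite (Rabs_minus_sym b a); field; lra).
    assert (rho / a <= 1) by (apply Rmult_le_reg_r with a; [lra|]; field_simplify; lra).
    pose proof (Rabs_pos (a - b)).
    apply Rle_trans with (1 * Rabs (a - b)); [apply Rmult_le_compat_r; lra| lra].
Qed.

Lemma l1norm_scal_diff n s t z w : 0 <= s ->
  l1norm n (vsub (fun k => Cmult (RtoC s) (z k)) (fun k => Cmult (RtoC t) (w k))) <= s * l1norm n (vsub z w) + Rabs (s - t) * l1norm n w.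
Proof.
  intros Hs. unfold l1norm, vsub. rewrite <- !rsum_scal, <- rsum_plus. apply rsum_le; intros.
  replace (Cminus (Cmult s (z k)) (Cmult t (w k))) with (Cplus (Cmult s (Cminus (z k) (w k))) (Cmult (RtoC (s - t)) (w k))) by Ceq.
  eapply Rle_trans.
  apply Cmod_triangle.
  rewrite !Cmod_mult, !Cmod_R.
  rewrite (Rabs_right s) by lra.
  lra.
Qed.

Section Retract.
Variables (n : nat) (rho : R).
Hypothesis Hrho : 0 < rho.

Definition retract_scale (z : nat -> C) : R := radial_scale rho (l1norm n z).
Definition retract (z : nat -> C) : nat -> C := fun k => Cmult (RtoC (retract_scale z)) (z k).

Lemma retract_scale_bound z : 0 < retract_scale z <= 1.
Proof. apply radial_scale_bound; auto. Qed.

Lemma l1norm_retract z : l1norm n (retract z) <= rho.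
Proof.
  unfold retract. rewrite l1norm_scal. pose proof (retract_scale_bound z).
  rewrite Rabs_right by lra. unfold retract_scale, radial_scale in *.
  destruct Rle_dec; [lra|]. right; field. lra.
Qed.

Lemma vnorm_retract z : vnorm n (retract z) <= rho.
Proof. eapply Rle_trans. apply vnorm_le_l1norm. apply l1norm_retract. Qed.

Lemma retract_id z : l1norm n z <= rho -> forall k, retract z k = z k.
Proof. intros H k. unfold retract, retract_scale, radial_scale. destruct Rle_dec; [|lra]. Ceq. Qed.

Lemma retract_lip z w : l1norm n (vsub (retract z) (retract w)) <= 2 * l1norm n (vsub z w).
Proof.
  unfold retract. eapply Rle_trans.
  { apply l1norm_scal_diff. pose proof (retract_scale_bound z); lra. }
  pose proof (retract_scale_bound z).
  assert (Hd : Rabs (retract_scale z - retract_scale w) * l1norm n w <= l1norm n (vsub z w)).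
  { eapply Rle_trans; [apply radial_scale_diff; auto; apply l1norm_nonneg|].
    pose proof (l1norm_rev n z w). pose proof (l1norm_rev n w z). rewrite l1norm_sub_sym in H1.
    unfold Rabs; destruct Rcase_abs; lra. }
  pose proof (l1norm_nonneg n (vsub z w)). nra.
Qed.
End Retract.

(** * The truncated field and its Picard iteration *)

Section TruncatedFlow.
Variables (n : nat) (A : nat -> nat -> C) (G : polymap) (x : C) (rho : R) (u : nat -> C).
Hypotheses (HG : in_ideal_y2 n G) (Hx : slit_disc2 x) (Hrho : 0 < rho) (Hrho1 : rho <= 1).

Definition tfield (t : R) (z : nat -> C) : nat -> C := fun k =>
  Cmult (neglog x) (Cplus (matvec n A (retract n rho z) k) (eval_poly n G (xcurve x t) (retract n rho z) k)).

(* Glip: Lipschitz constant of G on the ball; lipF0: of the field on the ball;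
   lipF: of the truncated field; boundF: bound of the truncated field;
   Gxlip: Lipschitz constant of G in x. *)
Definition Glip := rsum n (fun k => ylip_list n rho (G k)) / rho.
Definition lipF0 := Cmod (neglog x) * (matnorm n A + Glip).
Definition lipF := 2 * lipF0.
Definition boundF := lipF0 * rho.
Definition Gxlip := rsum n (fun k => xlip_list (G k)).

Lemma Glip_nonneg : 0 <= Glip.
Proof.
  unfold Glip. apply Rmult_le_pos.
  - apply rsum_nonneg; intros; apply ylip_list_nonneg; lra.
  - left; apply Rinv_0_lt_compat; auto.
Qed.

Lemma lipF0_nonneg : 0 <= lipF0.
Proof.
  unfold lipF0. apply Rmult_le_pos; [apply Cmod_ge_0|].
  pose proof (matnorm_nonneg n A); pose proof Glip_nonneg; lra.
Qed.

Lemma lipF_nonneg : 0 <= lipF.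
Proof. unfold lipF. pose proof lipF0_nonneg. lra. Qed.

Lemma boundF_nonneg : 0 <= boundF.
Proof. unfold boundF. pose proof lipF0_nonneg. nra. Qed.

Lemma Gxlip_nonneg : 0 <= Gxlip.
Proof. apply rsum_nonneg; intros; apply xlip_list_nonneg. Qed.

Lemma G_lip_ball t y1 y2 : vnorm n y1 <= rho -> vnorm n y2 <= rho ->
  l1norm n (vsub (eval_poly n G (xcurve x t) y1) (eval_poly n G (xcurve x t) y2))
  <= Glip * vnorm n (vsub y1 y2).
Proof.
  intros H1 H2.
  pose proof (poly_lip_y n G (xcurve x t) y1 y2 rho ltac:(lra) (xcurve_bound x t Hx) H1 H2).
  unfold Glip. apply Rmult_le_reg_l with rho; auto. eapply Rle_trans; [apply H|]. right. field. lra.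
Qed.

Lemma tfield_diff_retract t z w :
  l1norm n (vsub (tfield t z) (tfield t w))
  <= lipF0 * l1norm n (vsub (retract n rho z) (retract n rho w)).
Proof.
  set (pz := retract n rho z). set (pw := retract n rho w).
  unfold tfield. fold pz pw. eapply Rle_trans. apply l1norm_lin_diff. unfold lipF0.
  rewrite Rmult_assoc. apply Rmult_le_compat_l; [apply Cmod_ge_0|].
  assert (H1 : l1norm n (vsub (matvec n A pz) (matvec n A pw)) <= matnorm n A * l1norm n (vsub pz pw)).
  { rewrite (l1norm_ext n _ (matvec n A (vsub pz pw))) by (intros; rewrite matvec_sub; auto).
    eapply Rle_trans. apply l1norm_matvec.
    apply Rmult_le_compat_l; [apply matnorm_nonneg| apply vnorm_le_l1norm]. }
  assert (H2 : l1norm n (vsub (eval_poly n G (xcurve x t) pz) (eval_poly n G (xcurve x t) pw))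
               <= Glip * l1norm n (vsub pz pw)).
  { eapply Rle_trans; [apply G_lip_ball; apply vnorm_retract; auto|].
    apply Rmult_le_compat_l; [apply Glip_nonneg| apply vnorm_le_l1norm]. }
  lra.
Qed.

Lemma tfield_lip t z w : l1norm n (vsub (tfield t z) (tfield t w)) <= lipF * l1norm n (vsub z w).
Proof.
  eapply Rle_trans. apply tfield_diff_retract. unfold lipF.
  pose proof lipF0_nonneg. pose proof (retract_lip n rho Hrho z w). nra.
Qed.

(* Since G lies in (y)^2, the truncated field vanishes at y = 0. *)
Lemma tfield_zero t k : (k < n)%nat -> tfield t (fun _ => RtoC 0) k = RtoC 0.
Proof.
  intros Hk. unfold tfield.
  assert (HP : forall j, (j < n)%nat -> retract n rho (fun _ => RtoC 0) j = RtoC 0)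
    by (intros; unfold retract; Ceq).
  rewrite (matvec_ext n A _ _ HP), matvec_zero.
  rewrite eval_poly_eval_list, (eval_list_ext n (G k) (xcurve x t) _ _ HP), eval_list_zero.
  - Ceq.
  - intros m Hm. apply (HG k m Hk Hm).
Qed.

(* The truncated field is globally bounded (it vanishes at 0). *)
Lemma tfield_bound t z : l1norm n (tfield t z) <= boundF.
Proof.
  rewrite <- (l1norm_ext n (vsub (tfield t z) (tfield t (fun _ => RtoC 0))))
    by (intros k Hk; unfold vsub; rewrite tfield_zero by auto; Ceq).
  eapply Rle_trans. apply tfield_diff_retract. unfold boundF.
  apply Rmult_le_compat_l; [apply lipF0_nonneg|].
  rewrite (l1norm_ext n _ (retract n rho z)) by (intros k Hk; unfold vsub, retract; Ceq).
  apply l1norm_retract; auto.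
Qed.

Lemma tfield_tcont t s z :
  l1norm n (vsub (tfield t z) (tfield s z))
  <= Cmod (neglog x) * Gxlip * Cmod (Cminus (xcurve x t) (xcurve x s)).
Proof.
  unfold tfield. eapply Rle_trans. apply l1norm_lin_diff.
  rewrite Rmult_assoc. apply Rmult_le_compat_l; [apply Cmod_ge_0|].
  rewrite (l1norm_ext n (vsub _ _) (fun _ => RtoC 0)) by (intros; unfold vsub; Ceq).
  rewrite l1norm_const0, Rplus_0_l. unfold l1norm, Gxlip.
  rewrite Rmult_comm, <- rsum_scal. apply rsum_le; intros k Hk.
  unfold vsub. rewrite !eval_poly_eval_list, Rmult_comm.
  apply eval_list_lip_x; try apply xcurve_bound; auto.
  intros j Hj. eapply Rle_trans. apply Cmod_le_vnorm; eauto.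
  pose proof (vnorm_retract n rho Hrho z). lra.
Qed.

Definition l1cont (z : R -> nat -> C) :=
  forall t e, 0 < e -> exists d, 0 < d /\ forall s, Rabs (s - t) < d -> l1norm n (vsub (z s) (z t)) < e.

Lemma tfield_curve_cont z : l1cont z -> forall t e, 0 < e -> exists d, 0 < d /\
  forall s, Rabs (s - t) < d -> l1norm n (vsub (tfield s (z s)) (tfield t (z t))) < e.
Proof.
  intros Hz t e He.
  set (L := lipF). set (K := Cmod (neglog x) * Gxlip).
  assert (HL : 0 <= L) by apply lipF_nonneg.
  assert (HK : 0 <= K) by (apply Rmult_le_pos; [apply Cmod_ge_0| apply Gxlip_nonneg]).
  destruct (Hz t (e / (2 * (L + 1))) ltac:(apply Rdiv_lt_0_compat; lra)) as [d1 [Hd1 H1]].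
  destruct (xcurve_cont x t (e / (2 * (K + 1))) ltac:(apply Rdiv_lt_0_compat; lra)) as [d2 [Hd2 H2]].
  exists (Rmin d1 d2). split; [apply Rmin_pos; auto|]. intros s Hs.
  pose proof (Rmin_l d1 d2). pose proof (Rmin_r d1 d2).
  eapply Rle_lt_trans. apply (l1norm_tri n _ (tfield s (z t))).
  assert (A1 : l1norm n (vsub (tfield s (z s)) (tfield s (z t))) <= L * (e / (2 * (L + 1)))).
  { eapply Rle_trans. apply tfield_lip. apply Rmult_le_compat_l; auto. left; apply H1. lra. }
  assert (A2 : l1norm n (vsub (tfield s (z t)) (tfield t (z t))) <= K * (e / (2 * (K + 1)))).
  { eapply Rle_trans. apply tfield_tcont. apply Rmult_le_compat_l; auto. left; apply H2. lra. }
  assert (L * (e / (2 * (L + 1))) < e / 2)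
    by (apply Rmult_lt_reg_r with (2 * (L + 1)); [lra| field_simplify; nra]).
  assert (K * (e / (2 * (K + 1))) < e / 2)
    by (apply Rmult_lt_reg_r with (2 * (K + 1)); [lra| field_simplify; nra]).
  lra.
Qed.

Lemma integrand_cont (proj : C -> R) z k :
  (forall c, Rabs (proj c) <= Cmod c) -> (forall c c', proj (Cminus c c') = proj c - proj c') ->
  l1cont z -> (k < n)%nat -> cont_all (fun s => proj (tfield s (z s) k)).
Proof.
  intros Hproj Hlin Hz Hk t. apply contpt_of_eps. intros e He.
  destruct (tfield_curve_cont z Hz t e He) as [d [Hd H]]. exists d. split; auto. intros s Hs.
  rewrite <- Hlin. eapply Rle_lt_trans; [apply Hproj|].
  eapply Rle_lt_trans; [apply (Cmod_le_l1norm n (vsub (tfield s (z s)) (tfield t (z t))) k Hk)| auto].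
Qed.

Definition picard_int (z : R -> nat -> C) (t : R) (k : nat) : C :=
  (RInt (fun s => fst (tfield s (z s) k)) 0 t, RInt (fun s => snd (tfield s (z s) k)) 0 t).

Fixpoint picard (m : nat) (t : R) : nat -> C :=
  match m with
  | O => u
  | S m' => fun k => Cplus (u k) (picard_int (picard m' ) t k)
  end.

Lemma picard_int_at0 z k : picard_int z 0 k = RtoC 0.
Proof. unfold picard_int. rewrite !RInt0. reflexivity. Qed.

Lemma picard_int_diff z1 z2 s t k :
  Cmod (Cminus (picard_int z1 s k) (picard_int z2 t k))
  <= Rabs (RInt (fun r => fst (tfield r (z1 r) k)) 0 s - RInt (fun r => fst (tfield r (z2 r) k)) 0 t)
   + Rabs (RInt (fun r => snd (tfield r (z1 r) k)) 0 s - RInt (fun r => snd (tfield r (z2 r) k)) 0 t).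
Proof. apply Cmod_le_sum. Qed.

Lemma picard_int_lip z k s t : l1cont z -> (k < n)%nat ->
  Cmod (Cminus (picard_int z s k) (picard_int z t k)) <= 2 * boundF * Rabs (s - t).
Proof.
  intros Hz Hk.
  assert (Bd : forall s0, Cmod (tfield s0 (z s0) k) <= boundF)
    by (intros; eapply Rle_trans; [apply (Cmod_le_l1norm n _ k Hk)| apply tfield_bound]).
  pose proof (int_lip _ boundF (integrand_cont fst z k re_le_Cmod (fun _ _ => eq_refl) Hz Hk)
                (fun s0 => Rle_trans _ _ _ (re_le_Cmod _) (Bd s0)) s t).
  pose proof (int_lip _ boundF (integrand_cont snd z k im_le_Cmod (fun _ _ => eq_refl) Hz Hk)
                (fun s0 => Rle_trans _ _ _ (im_le_Cmod _) (Bd s0)) s t).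
  eapply Rle_trans. apply picard_int_diff. lra.
Qed.

(* Contraction estimate for the integral operator in the weighted norm
   sup_t e^(-2K|t|) |z(t)|_1, for any K >= 1. *)
Lemma picard_int_contract z1 z2 k K D t : l1cont z1 -> l1cont z2 -> (k < n)%nat -> 1 <= K -> 0 <= D ->
  (forall s, l1norm n (vsub (z1 s) (z2 s)) <= D * exp (2 * K * Rabs s)) ->
  Cmod (Cminus (picard_int z1 t k) (picard_int z2 t k)) <= 2 * (lipF * D * exp (2 * K * Rabs t) / (2 * K)).
Proof.
  intros H1 H2 Hk HK HD Hb.
  assert (Hd : forall s, Cmod (Cminus (tfield s (z1 s) k) (tfield s (z2 s) k)) <= lipF * D * exp (2 * K * Rabs s)).
  { intros s. eapply Rle_trans. apply (Cmod_le_l1norm n (vsub (tfield s (z1 s)) (tfield s (z2 s))) k Hk).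
    eapply Rle_trans. apply tfield_lip. rewrite Rmult_assoc.
    apply Rmult_le_compat_l; [apply lipF_nonneg| apply Hb]. }
  assert (HC : 0 <= lipF * D) by (pose proof lipF_nonneg; nra).
  pose proof (int_exp_bound _ _ K t
    (cont_all_minus _ _ (integrand_cont fst z1 k re_le_Cmod (fun _ _ => eq_refl) H1 Hk)
                        (integrand_cont fst z2 k re_le_Cmod (fun _ _ => eq_refl) H2 Hk)) ltac:(lra) HC
    (fun s => Rle_trans _ _ _ (re_le_Cmod (Cminus (tfield s (z1 s) k) (tfield s (z2 s) k))) (Hd s))).
  pose proof (int_exp_bound _ _ K t
    (cont_all_minus _ _ (integrand_cont snd z1 k im_le_Cmod (fun _ _ => eq_refl) H1 Hk)
                        (integrand_cont snd z2 k im_le_Cmod (fun _ _ => eq_refl) H2 Hk)) ltac:(lra) HC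
    (fun s => Rle_trans _ _ _ (im_le_Cmod (Cminus (tfield s (z1 s) k) (tfield s (z2 s) k))) (Hd s))).
  eapply Rle_trans. apply picard_int_diff.
  rewrite !RInt_sub by (apply integrand_cont; auto using re_le_Cmod, im_le_Cmod).
  cbv beta in *. lra.
Qed.

Lemma picard_cont m : l1cont (picard m).
Proof.
  induction m as [|m IHm]; intros t e He.
  - exists 1. split; [lra|]. intros s _. simpl.
    rewrite (l1norm_ext n _ (fun _ => RtoC 0)) by (intros; unfold vsub; Ceq).
    rewrite l1norm_const0; auto.
  - set (B := boundF). assert (HB : 0 <= B) by apply boundF_nonneg. pose proof (pos_INR n).
    exists (e / (2 * INR n * B + 1)). split; [apply Rdiv_lt_0_compat; auto; nra|]. intros s Hs.
    unfold l1norm. eapply Rle_lt_trans.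
    { apply (rsum_const_le n _ (2 * B * Rabs (s - t))). intros k Hk.
      replace (vsub (picard (S m) s) (picard (S m) t) k)
        with (Cminus (picard_int (picard m) s k) (picard_int (picard m) t k)) by (unfold vsub; simpl; Ceq).
      apply picard_int_lip; auto. }
    pose proof (Rabs_pos (s - t)).
    assert ((2 * INR n * B + 1) * Rabs (s - t) < e).
    { apply Rmult_lt_reg_r with (/ (2 * INR n * B + 1)); [apply Rinv_0_lt_compat; nra|].
      rewrite Rmult_comm, <- Rmult_assoc, Rinv_l, Rmult_1_l by nra. exact Hs. }
    nra.
Qed.

(* Constants of the weighted contraction: weight exponent K = picard_rate and
   initial gap picard_init. *)
Definition picard_rate := 2 * INR n * lipF + 1.
Definition picard_init := 2 * INR n * boundF + 1.

Lemma picard_rate_ge1 : 1 <= picard_rate.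
Proof. unfold picard_rate. pose proof lipF_nonneg. pose proof (pos_INR n). nra. Qed.

Lemma picard_init_pos : 0 < picard_init.
Proof. unfold picard_init. pose proof boundF_nonneg. pose proof (pos_INR n). nra. Qed.

Lemma picard_contract m t :
  l1norm n (vsub (picard (S m) t) (picard m t)) <= picard_init * (/ 2) ^ m * exp (2 * picard_rate * Rabs t).
Proof.
  pose proof picard_rate_ge1.
  pose proof picard_init_pos.
  pose proof (pos_INR n).
  pose proof lipF_nonneg.
  revert t. induction m as [|m IHm]; intros t.
  - simpl pow. rewrite Rmult_1_r. unfold l1norm.
    eapply Rle_trans.
    { apply (rsum_const_le n _ (2 * boundF * Rabs t)). intros k Hk.
      replace (vsub (picard 1 t) (picard 0 t) k)
        with (Cminus (picard_int (picard 0) t k) (picard_int (picard 0) 0 k))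
        by (rewrite picard_int_at0; unfold vsub; simpl; Ceq).
      rewrite <- (Rminus_0_r t) at 2. apply picard_int_lip; auto. apply picard_cont. }
    pose proof boundF_nonneg. pose proof (Rabs_pos t).
    pose proof (exp_ineq1_le (2 * picard_rate * Rabs t)).
    assert (Rabs t <= exp (2 * picard_rate * Rabs t)) by nra.
    assert (0 <= INR n * boundF) by nra.
    unfold picard_init. nra.
  - set (E := picard_init * (/ 2) ^ m * exp (2 * picard_rate * Rabs t)).
    assert (HE : 0 <= E).
    { unfold E. pose proof (exp_pos (2 * picard_rate * Rabs t)). pose proof (pow_le (/2) m ltac:(lra)).
      apply Rmult_le_pos; [apply Rmult_le_pos|]; lra. }
    unfold l1norm. eapply Rle_trans.
    { apply (rsum_const_le n _ (2 * (lipF * (picard_init * (/ 2) ^ m) * exp (2 * picard_rate * Rabs t)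
                                       / (2 * picard_rate)))).
      intros k Hk.
      replace (vsub (picard (S (S m)) t) (picard (S m) t) k)
        with (Cminus (picard_int (picard (S m)) t k) (picard_int (picard m) t k)) by (unfold vsub; simpl; Ceq).
      apply picard_int_contract; auto using picard_cont.
      apply Rmult_le_pos; [lra| apply pow_le; lra]. }
    replace (INR n * (2 * (lipF * (picard_init * (/ 2) ^ m) * exp (2 * picard_rate * Rabs t) / (2 * picard_rate))))
      with ((INR n * lipF / picard_rate) * E) by (unfold E; field; lra).
    replace (picard_init * (/ 2) ^ S m * exp (2 * picard_rate * Rabs t)) with ((/ 2) * E) by (unfold E; simpl; ring).
    apply Rmult_le_compat_r; auto.
    apply Rmult_le_reg_r with picard_rate; [lra|]. unfold Rdiv.
    rewrite Rmult_assoc, Rinv_l by lra. unfold picard_rate. lra.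
Qed.

Definition flow_lim (t : R) (k : nat) : C :=
  (real (Lim_seq (fun m => fst (picard m t k))), real (Lim_seq (fun m => snd (picard m t k)))).

Definition picard_gap t := picard_init * exp (2 * picard_rate * Rabs t).

Lemma picard_gap_nonneg t : 0 <= picard_gap t.
Proof.
  unfold picard_gap.
  pose proof picard_init_pos.
  pose proof (exp_pos (2 * picard_rate * Rabs t)).
  nra.
Qed.

Lemma flow_lim_proj (proj : C -> R) t k :
  (forall c, Rabs (proj c) <= Cmod c) -> (forall c c', proj (Cminus c c') = proj c - proj c') ->
  proj (flow_lim t k) = real (Lim_seq (fun m => proj (picard m t k))) -> (k < n)%nat ->
  Un_cv (fun m => proj (picard m t k)) (proj (flow_lim t k)) /\
  forall m, Rabs (proj (flow_lim t k) - proj (picard m t k)) <= 2 * picard_gap t * (/2)^m.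
Proof.
  intros Hproj Hlin Hlim Hk.
  assert (Hstep : forall m, Rabs (proj (picard (S m) t k) - proj (picard m t k)) <= picard_gap t * (/2)^m).
  { intros m. rewrite <- Hlin. eapply Rle_trans; [apply Hproj|].
    eapply Rle_trans. apply (Cmod_le_l1norm n (vsub (picard (S m) t) (picard m t)) k Hk).
    eapply Rle_trans. apply picard_contract. unfold picard_gap. right; ring. }
  destruct (geom_limit _ _ (picard_gap_nonneg t) Hstep) as [l [H1 H2]].
  rewrite Hlim, (lim_real _ l H1). auto.
Qed.

Lemma flow_lim_close t m : l1norm n (vsub (flow_lim t) (picard m t)) <= INR n * (4 * picard_gap t * (/2)^m).
Proof.
  apply rsum_const_le. intros k Hk. unfold vsub. eapply Rle_trans. apply Cmod_le_sum.
  destruct (flow_lim_proj fst t k re_le_Cmod (fun _ _ => eq_refl) eq_refl Hk) as [_ H1].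
  destruct (flow_lim_proj snd t k im_le_Cmod (fun _ _ => eq_refl) eq_refl Hk) as [_ H2].
  specialize (H1 m). specialize (H2 m).
  change (Rabs (fst (flow_lim t k) - fst (picard m t k)) + Rabs (snd (flow_lim t k) - snd (picard m t k))
          <= 4 * picard_gap t * (/ 2) ^ m). lra.
Qed.

Lemma picard_at0 m k : picard m 0 k = u k.
Proof. destruct m; [reflexivity|]. simpl. rewrite picard_int_at0. Ceq. Qed.

Lemma flow_lim_at0 k : flow_lim 0 k = u k.
Proof.
  unfold flow_lim.
  rewrite (Lim_seq_ext _ (fun _ => fst (u k))) by (intros; rewrite picard_at0; auto).
  rewrite (Lim_seq_ext (fun m => snd (picard m 0 k)) (fun _ => snd (u k))) by (intros; rewrite picard_at0; auto).
  rewrite !Lim_seq_const. simpl. destruct (u k); auto.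
Qed.

(* We differentiate on the open interval (-1/2, 3/2) containing [0,1]. *)
Definition d1 : posreal := mkposreal 1 Rlt_0_1.

Lemma picard_gap_bound y : Boule (1/2) d1 y -> picard_gap y <= picard_init * exp (4 * picard_rate).
Proof.
  intros Hy. unfold Boule, d1 in Hy; simpl in Hy. unfold picard_gap.
  apply Rmult_le_compat_l; [pose proof picard_init_pos; lra|].
  assert (Rabs y <= 2) by (revert Hy; unfold Rabs; repeat destruct Rcase_abs; intros; lra).
  pose proof picard_rate_ge1.
  destruct (Req_dec (2 * picard_rate * Rabs y) (4 * picard_rate)) as [E|E]; [rewrite E; lra|].
  left; apply exp_increasing. nra.
Qed.

Lemma tfield_picard_unif e : 0 < e -> exists N, forall m t, (N <= m)%nat -> Boule (1/2) d1 t ->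
  l1norm n (vsub (tfield t (flow_lim t)) (tfield t (picard m t))) < e.
Proof.
  intros He.
  set (Cst := lipF * (INR n * (4 * (picard_init * exp (4 * picard_rate))))).
  assert (HC : 0 <= Cst).
  { pose proof lipF_nonneg. pose proof (pos_INR n). pose proof picard_init_pos.
    pose proof (exp_pos (4 * picard_rate)). unfold Cst.
    apply Rmult_le_pos; auto. apply Rmult_le_pos; auto. nra. }
  destruct (pow_lt_1_zero (/2) ltac:(rewrite Rabs_right; lra) (e / (Cst + 1))
              ltac:(apply Rdiv_lt_0_compat; lra)) as [N HN].
  exists N. intros m t Hm Ht.
  assert (HN' := HN m Hm). rewrite Rabs_right in HN' by (apply Rle_ge, pow_le; lra).
  assert (Hp : 0 <= (/2)^m) by (apply pow_le; lra).
  eapply Rle_lt_trans. apply tfield_lip.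
  eapply Rle_lt_trans. apply Rmult_le_compat_l; [apply lipF_nonneg| apply flow_lim_close].
  assert (lipF * (INR n * (4 * picard_gap t * (/ 2) ^ m)) <= Cst * (/2)^m).
  { unfold Cst.
    replace (lipF * (INR n * (4 * picard_gap t * (/ 2) ^ m)))
      with (lipF * (INR n * (4 * (/ 2) ^ m)) * picard_gap t) by ring.
    replace (lipF * (INR n * (4 * (picard_init * exp (4 * picard_rate)))) * (/ 2) ^ m)
      with (lipF * (INR n * (4 * (/ 2) ^ m)) * (picard_init * exp (4 * picard_rate))) by ring.
    apply Rmult_le_compat_l; [|apply picard_gap_bound; auto].
    pose proof lipF_nonneg. pose proof (pos_INR n). apply Rmult_le_pos; auto. nra. }
  assert (Cst * (/2)^m < e).
  { apply Rle_lt_trans with ((Cst + 1) * (/2)^m); [nra|].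
    apply Rmult_lt_reg_r with (/ (Cst + 1)); [apply Rinv_0_lt_compat; lra|].
    replace ((Cst + 1) * (/ 2) ^ m * / (Cst + 1)) with ((/2)^m) by (field; lra). exact HN'. }
  lra.
Qed.

(* Each real component of the limit is differentiable with derivative the
   corresponding component of F(t, z(t)): uniform convergence of the
   derivatives of the iterates. *)
Lemma flow_lim_derive_proj (proj : C -> R) k y :
  (forall c, Rabs (proj c) <= Cmod c) -> (forall c c', proj (Cminus c c') = proj c - proj c') ->
  (forall m t, proj (picard (S m) t k) = proj (u k) + RInt (fun s => proj (tfield s (picard m s) k)) 0 t) ->
  (forall t, proj (flow_lim t k) = real (Lim_seq (fun m => proj (picard m t k)))) ->
  (k < n)%nat -> Boule (1/2) d1 y ->
  derivable_pt_lim (fun t => proj (flow_lim t k)) y (proj (tfield y (flow_lim y) k)).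
Proof.
  intros Hproj Hlin Hint Hlim Hk Hy.
  apply (CVU_derivable (fun m t => proj (picard (S m) t k)) (fun m t => proj (tfield t (picard m t) k))
     (fun t => proj (flow_lim t k)) (fun t => proj (tfield t (flow_lim t) k)) (1/2) d1); auto.
  - intros e He. destruct (tfield_picard_unif e He) as [N HN]. exists N. intros m t Hm Ht.
    rewrite <- Hlin. eapply Rle_lt_trans; [apply Hproj|].
    eapply Rle_lt_trans; [apply (Cmod_le_l1norm n (vsub (tfield t (flow_lim t)) (tfield t (picard m t))) k Hk)|].
    apply HN; auto.
  - intros t Ht. apply (Un_cv_shift (fun m => proj (picard m t k))).
    apply (flow_lim_proj proj t k Hproj Hlin (Hlim t) Hk).
  - intros m t Ht. apply is_derive_Reals.
    apply (is_derive_ext (fun t => proj (u k) + RInt (fun s => proj (tfield s (picard m s) k)) 0 t));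
      [intros; rewrite Hint; auto|].
    apply int_deriv. apply integrand_cont; auto. apply picard_cont.
Qed.

Lemma flow_lim_deriv k y : (k < n)%nat -> Boule (1/2) d1 y ->
  is_derive (fun t => flow_lim t k) y (tfield y (flow_lim y) k).
Proof.
  intros Hk Hy.
  assert (H1 := flow_lim_derive_proj fst k y re_le_Cmod (fun _ _ => eq_refl)
                  (fun _ _ => eq_refl) (fun _ => eq_refl) Hk Hy).
  assert (H2 := flow_lim_derive_proj snd k y im_le_Cmod (fun _ _ => eq_refl)
                  (fun _ _ => eq_refl) (fun _ => eq_refl) Hk Hy).
  apply is_derive_Reals in H1. apply is_derive_Reals in H2.
  pose proof (is_derive_C_pair _ _ y _ _ H1 H2) as H.
  rewrite <- surjective_pairing in H. eapply is_derive_ext; [|apply H].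
  intros; simpl. apply surjective_pairing.
Qed.

End TruncatedFlow.

(** * Estimates for solutions of the flow equation *)

Section FlowEstimates.
Variables (n : nat) (A : nat -> nat -> C) (G : polymap) (delta0 delta1 eps : R).
Hypotheses (HG : in_ideal_y2 n G) (Hd0 : 0 < delta0) (Hd1 : 0 < delta1) (He : 0 < eps)
  (HA : dissipative n A delta0 delta1 eps).
Variable x : C.
Hypothesis Hx : slit_disc2 x.

Definition diff_field (y1 y2 : R -> nat -> C) t : nat -> C := fun k =>
  Cmult (neglog x) (Cplus (matvec n A (vsub (y1 t) (y2 t)) k)
     (vsub (eval_poly n G (cpow_real x (1 - t)) (y1 t)) (eval_poly n G (cpow_real x (1 - t)) (y2 t)) k)).

Lemma flow_diff_deriv u1 u2 y1 y2 t k :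
  is_flow_sol n A G x u1 y1 -> is_flow_sol n A G x u2 y2 -> 0 <= t <= 1 -> (k < n)%nat ->
  is_derive (fun s => vsub (y1 s) (y2 s) k) t (diff_field y1 y2 t k).
Proof.
  intros [_ H1] [_ H2] Ht Hk.
  pose proof (@is_derive_minus R_AbsRing C_R_NormedModule _ _ t _ _ (H1 t Ht k Hk) (H2 t Ht k Hk)).
  eapply is_derive_ext; [|eapply is_derive_valC; [apply H|]]; [intros; reflexivity|].
  unfold diff_field. rewrite matvec_sub. unfold vsub, neglog, minus, plus, opp; simpl.
  apply injective_projections; simpl; unfold plus, opp; simpl; ring.
Qed.

Lemma sqnorm_diff_deriv u1 u2 y1 y2 t :
  is_flow_sol n A G x u1 y1 -> is_flow_sol n A G x u2 y2 -> 0 <= t <= 1 ->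
  is_derive (fun s => sqnorm n (vsub (y1 s) (y2 s))) t
    (2 * Re (cinner n (diff_field y1 y2 t) (vsub (y1 t) (y2 t)))).
Proof.
  intros H1 H2 Ht. apply (is_derive_sqnorm n (fun s => vsub (y1 s) (y2 s))).
  intros k Hk. apply (flow_diff_deriv u1 u2); auto.
Qed.

(* A solution is bounded on [0,1]: |y|^2 is differentiable, hence continuous. *)
Lemma flow_bounded u y : is_flow_sol n A G x u y ->
  exists M, 0 < M /\ forall t, 0 <= t <= 1 -> vnorm n (y t) <= M.
Proof.
  intros [_ Hy].
  destruct (continuity_ab_maj (fun t => sqnorm n (y t)) 0 1 ltac:(lra)) as [tm [Hmax _]].
  { intros c Hc. eapply is_derive_contpt. apply (is_derive_sqnorm n y). intros k Hk. apply Hy; auto. }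
  exists (sqrt (sqnorm n (y tm)) + 1). split; [pose proof (sqrt_pos (sqnorm n (y tm))); lra|].
  intros t Ht. rewrite vnorm_sqnorm.
  assert (sqrt (sqnorm n (y t)) <= sqrt (sqnorm n (y tm))) by (apply sqrt_le_1_alt, Hmax; auto).
  lra.
Qed.

Lemma diff_field_lip y1 y2 t M : 0 < M -> 0 <= t <= 1 ->
  vnorm n (y1 t) <= M -> vnorm n (y2 t) <= M ->
  l1norm n (diff_field y1 y2 t)
  <= Cmod (neglog x) * (matnorm n A + rsum n (fun k => ylip_list n M (G k)) / M)
     * vnorm n (vsub (y1 t) (y2 t)).
Proof.
  intros HM Ht B1 B2. set (d := vsub (y1 t) (y2 t)).
  unfold diff_field. eapply Rle_trans; [apply l1norm_lin|]. fold d.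
  rewrite Rmult_assoc. apply Rmult_le_compat_l; [apply Cmod_ge_0|].
  pose proof (l1norm_matvec n A d).
  pose proof (poly_lip_y n G (cpow_real x (1 - t)) (y1 t) (y2 t) M ltac:(lra) (cpow_bound x t Hx Ht) B1 B2) as HGl.
  assert (l1norm n (vsub (eval_poly n G (cpow_real x (1 - t)) (y1 t)) (eval_poly n G (cpow_real x (1 - t)) (y2 t)))
          <= rsum n (fun k => ylip_list n M (G k)) / M * vnorm n d).
  { apply Rmult_le_reg_l with M; auto. eapply Rle_trans; [apply HGl|]. right. unfold d. field. lra. }
  lra.
Qed.

(* Uniqueness: Gronwall applied to |y1 - y2|^2, which vanishes at t = 0. *)
Lemma flow_unique u y1 y2 : is_flow_sol n A G x u y1 -> is_flow_sol n A G x u y2 ->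
  forall t, 0 <= t <= 1 -> forall k, (k < n)%nat -> y1 t k = y2 t k.
Proof.
  intros F1 F2.
  destruct (flow_bounded u y1 F1) as [M1 [HM1 B1]].
  destruct (flow_bounded u y2 F2) as [M2 [HM2 B2]].
  set (M := Rmax M1 M2).
  assert (HM : 0 < M) by (unfold M; apply Rlt_le_trans with M1; [lra| apply Rmax_l]).
  set (kp := Cmod (neglog x) * (matnorm n A + rsum n (fun k => ylip_list n M (G k)) / M)).
  assert (Hg : forall t, 0 <= t <= 1 ->
            sqnorm n (vsub (y1 t) (y2 t)) <= exp (2 * kp * t) * sqnorm n (vsub (y1 0) (y2 0))).
  { apply (gronwall (fun t => sqnorm n (vsub (y1 t) (y2 t)))
             (fun t => 2 * Re (cinner n (diff_field y1 y2 t) (vsub (y1 t) (y2 t)))) kp);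
      [intros; apply (sqnorm_diff_deriv u u); auto|].
    intros t Ht. set (d := vsub (y1 t) (y2 t)).
    assert (Hl : l1norm n (diff_field y1 y2 t) <= kp * vnorm n d).
    { apply diff_field_lip; auto.
      - eapply Rle_trans; [apply B1; auto| apply Rmax_l].
      - eapply Rle_trans; [apply B2; auto| apply Rmax_r]. }
    pose proof (Cmod_cinner n (diff_field y1 y2 t) d).
    pose proof (re_le_Cmod (cinner n (diff_field y1 y2 t) d)).
    pose proof (Rle_abs (Re (cinner n (diff_field y1 y2 t) d))).
    pose proof (vnorm_nonneg n d). rewrite <- vnorm_sq. simpl. nra. }
  intros t Ht k Hk.
  assert (H0 : sqnorm n (vsub (y1 0) (y2 0)) = 0).
  { destruct F1 as [I1 _], F2 as [I2 _].
    rewrite (sqnorm_ext n _ (fun _ => RtoC 0)) by (intros j Hj; unfold vsub; rewrite I1, I2 by auto; Ceq).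
    unfold sqnorm. rewrite (rsum_ext _ _ (fun _ => 0)) by (intros; rewrite Cmod_0; simpl; ring).
    apply rsum_zero. }
  specialize (Hg t Ht).
  rewrite H0, Rmult_0_r in Hg.
  pose proof (sqnorm_nonneg n (vsub (y1 t) (y2 t))).
  pose proof (sqnorm_zero n (vsub (y1 t) (y2 t)) ltac:(lra) k Hk) as Hd. unfold vsub in Hd.
  replace (y1 t k) with (Cplus (Cminus (y1 t k) (y2 t k)) (y2 t k)) by Ceq. rewrite Hd. Ceq.
Qed.

Variable rho : R.
Hypotheses (Hrho : 0 < rho) (Hrho1 : rho <= 1) (Hsmall : rho * Gsize n G <= eps).

(* Writing retract w = s w, the truncated field is s lambda (A w + g) with
   g = G(s w) / s; this perturbation is eps-small against w. *)
Definition tperturb t (w : nat -> C) : nat -> C := fun k =>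
  Cmult (RtoC (/ retract_scale n rho w)) (eval_poly n G (xcurve x t) (retract n rho w) k).

Lemma tfield_factor t w k :
  tfield n A G x rho t w k
  = Cmult (RtoC (retract_scale n rho w)) (Cmult (neglog x) (Cplus (matvec n A w k) (tperturb t w k))).
Proof.
  unfold tfield, tperturb. unfold retract at 1. rewrite matvec_scal.
  pose proof (retract_scale_bound n rho Hrho w) as Hs.
  set (s := retract_scale n rho w) in *. set (e := eval_poly _ _ _ _ k).
  apply injective_projections; simpl; field; lra.
Qed.

Lemma tperturb_small t w : Cmod (cinner n (tperturb t w) w) <= eps * sqnorm n w.
Proof.
  set (s := retract_scale n rho w).
  pose proof (retract_scale_bound n rho Hrho w) as Hs.
  fold s in Hs.
  eapply Rle_trans. apply Cmod_cinner. unfold tperturb. fold s. rewrite l1norm_scal.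
  rewrite Rabs_right by (apply Rle_ge, Rlt_le, Rinv_0_lt_compat; lra).
  assert (HP : vnorm n (retract n rho w) = s * vnorm n w) by (apply vnorm_scal; lra).
  pose proof (l1norm_G_small n G rho (xcurve x t) (retract n rho w) HG (conj Hrho Hrho1)
                (xcurve_bound x t Hx) (vnorm_retract n rho Hrho w)) as HGs.
  rewrite HP in HGs.
  assert (Hg : / s * l1norm n (eval_poly n G (xcurve x t) (retract n rho w)) <= rho * Gsize n G * vnorm n w).
  { apply Rmult_le_reg_l with s; [lra|]. rewrite <- Rmult_assoc, Rinv_r, Rmult_1_l by lra. nra. }
  rewrite <- vnorm_sq. pose proof (vnorm_nonneg n w). pose proof (Gsize_nonneg n G).
  apply Rle_trans with (rho * Gsize n G * vnorm n w * vnorm n w); [apply Rmult_le_compat_r; auto|].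
  simpl. nra.
Qed.

(* One-sided energy bound for the truncated field, used with y2 = 0 to keep
   solutions in the ball: Re <F(w), w> <= (delta0 + s) |w|^2. *)
Lemma tfield_energy t w :
  Re (cinner n (tfield n A G x rho t w) w) <= (delta0 + slack n A delta1 eps) * sqnorm n w.
Proof.
  set (s := retract_scale n rho w).
  pose proof (retract_scale_bound n rho Hrho w) as Hs.
  fold s in Hs.
  set (E := Re (cinner n (fun k => Cmult (neglog x) (Cplus (matvec n A w k) (tperturb t w k))) w)).
  assert (Hfac : Re (cinner n (tfield n A G x rho t w) w) = s * E).
  { unfold E, cinner. rewrite <- re_scal_l, <- csum_scal. f_equal. apply csum_ext; intros k _.
    rewrite tfield_factor. fold s. Ceq. }
  destruct (energy_bound n A delta0 delta1 eps x w (tperturb t w) Hd0 Hd1 He HA Hx (tperturb_small t w))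
    as [H1 _]. fold E in H1.
  pose proof (slit_ln x Hx). pose proof (sqnorm_nonneg n w).
  pose proof (slack_pos n A delta1 eps Hd1 He).
  rewrite Hfac.
  assert (ln (Cmod x) * delta0 * sqnorm n w <= delta0 * sqnorm n w)
    by (apply Rmult_le_compat_r; nra).
  destruct (Rle_lt_dec 0 E); nra.
Qed.

Lemma diff_energy y1 y2 t : 0 <= t <= 1 -> vnorm n (y1 t) <= rho -> vnorm n (y2 t) <= rho ->
  let d := vsub (y1 t) (y2 t) in
  let E := Re (cinner n (diff_field y1 y2 t) d) in
  E <= (ln (Cmod x) * delta0 + slack n A delta1 eps) * sqnorm n d /\
  (ln (Cmod x) * delta1 - slack n A delta1 eps) * sqnorm n d <= E.
Proof.
  intros Ht B1 B2 d E.
  set (X := cpow_real x (1 - t)).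
  pose proof (G_small n G rho _ _ _ HG (conj Hrho Hrho1) (cpow_bound x t Hx Ht) B1 B2) as HGs.
  fold X d in HGs.
  apply (energy_bound n A delta0 delta1 eps x d (vsub (eval_poly n G X (y1 t)) (eval_poly n G X (y2 t)))
           Hd0 Hd1 He HA Hx).
  eapply Rle_trans. apply Cmod_cinner. pose proof (vnorm_nonneg n d). pose proof (Gsize_nonneg n G).
  rewrite <- vnorm_sq. apply Rle_trans with (rho * Gsize n G * vnorm n d * vnorm n d).
  - apply Rmult_le_compat_r; auto.
  - simpl. nra.
Qed.

(* The bi-Lipschitz estimate at time 1, by Gronwall applied to |d|^2 and
   to -|d|^2. *)
Lemma flow_bilipschitz u v y1 y2 :
  is_flow_sol n A G x u y1 -> is_flow_sol n A G x v y2 ->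
  (forall t, 0 <= t <= 1 -> vnorm n (y1 t) <= rho /\ vnorm n (y2 t) <= rho) ->
  exp (- slack n A delta1 eps) * Rpower (Cmod x) delta1 * vnorm n (vsub u v)
    <= vnorm n (vsub (y1 1) (y2 1)) /\
  vnorm n (vsub (y1 1) (y2 1))
    <= exp (slack n A delta1 eps) * Rpower (Cmod x) delta0 * vnorm n (vsub u v).
Proof.
  intros F1 F2 Hb. set (c := slack n A delta1 eps).
  set (Q := fun t => sqnorm n (vsub (y1 t) (y2 t))).
  set (dQ := fun t => 2 * Re (cinner n (diff_field y1 y2 t) (vsub (y1 t) (y2 t)))).
  assert (HdQ : forall t, 0 <= t <= 1 -> is_derive Q t (dQ t))
    by (intros; apply (sqnorm_diff_deriv u v); auto).
  assert (HE : forall t, 0 <= t <= 1 ->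
            dQ t <= 2 * (ln (Cmod x) * delta0 + c) * Q t /\ - dQ t <= 2 * (ln (Cmod x) * delta1 - c) * - Q t).
  { intros t Ht. destruct (Hb t Ht) as [B1 B2]. destruct (diff_energy y1 y2 t Ht B1 B2).
    unfold dQ, Q, c. lra. }
  assert (Q0 : Q 0 = sqnorm n (vsub u v)).
  { destruct F1 as [I1 _], F2 as [I2 _]. apply sqnorm_ext. intros k Hk. unfold vsub. rewrite I1, I2 by auto. auto. }
  assert (Up : Q 1 <= exp (2 * (ln (Cmod x) * delta0 + c) * 1) * Q 0)
    by (apply (gronwall Q dQ); [auto| apply HE| lra]).
  assert (Lo : - Q 1 <= exp (2 * (ln (Cmod x) * delta1 - c) * 1) * - Q 0).
  { apply (gronwall (fun t => - Q t) (fun t => - dQ t)); [|apply HE| lra].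
    intros t Ht. apply (@is_derive_opp R_AbsRing R_NormedModule). auto. }
  rewrite Rmult_1_r, Q0 in Up, Lo. pose proof (sqnorm_nonneg n (vsub u v)).
  rewrite !vnorm_sqnorm. unfold Rpower. split.
  - replace (exp (- c) * exp (delta1 * ln (Cmod x))) with (exp (ln (Cmod x) * delta1 - c))
      by (rewrite <- exp_plus; f_equal; ring).
    rewrite <- sqrt_exp2 by auto. apply sqrt_le_1_alt. unfold Q in Lo. lra.
  - replace (exp c * exp (delta0 * ln (Cmod x))) with (exp (ln (Cmod x) * delta0 + c))
      by (rewrite <- exp_plus; f_equal; ring).
    rewrite <- sqrt_exp2 by auto. apply sqrt_le_1_alt. exact Up.
Qed.

Definition growth := delta0 + slack n A delta1 eps.
Definition radius := rho / ((INR n + 1) * exp growth).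

Lemma growth_pos : 0 < growth.
Proof. unfold growth. pose proof (slack_pos n A delta1 eps Hd1 He). lra. Qed.

Lemma radius_pos : 0 < radius.
Proof.
  unfold radius. apply Rdiv_lt_0_compat; auto.
  pose proof (pos_INR n). pose proof (exp_pos growth). nra.
Qed.

Lemma boule01 t : 0 <= t <= 1 -> Boule (1/2) d1 t.
Proof. intros Ht. unfold Boule, d1; simpl. unfold Rabs; destruct Rcase_abs; lra. Qed.

Variable u : nat -> C.
Notation z := (flow_lim n A G x rho u).

Lemma flow_lim_norm t : 0 <= t <= 1 -> vnorm n (z t) <= exp growth * vnorm n u.
Proof.
  intros Ht.
  assert (Hgr : sqnorm n (z t) <= exp (2 * growth * t) * sqnorm n (z 0)).
  { apply (gronwall (fun t => sqnorm n (z t)) (fun t => 2 * Re (cinner n (tfield n A G x rho t (z t)) (z t)))); auto.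
    - intros s Hs.
      apply is_derive_sqnorm.
      intros k Hk.
      apply flow_lim_deriv; auto.
      apply boule01; auto.
    - intros s Hs. pose proof (tfield_energy s (z s)). unfold growth. lra. }
  rewrite (sqnorm_ext n (z 0) u) in Hgr by (intros; apply flow_lim_at0; auto).
  assert (exp (2 * growth * t) <= exp (2 * growth)).
  { pose proof growth_pos. destruct (Req_dec t 1) as [->|]; [rewrite Rmult_1_r; lra|].
    left; apply exp_increasing. nra. }
  pose proof (sqnorm_nonneg n u).
  rewrite !vnorm_sqnorm, <- sqrt_exp2 by auto. apply sqrt_le_1_alt.
  eapply Rle_trans; [apply Hgr|]. apply Rmult_le_compat_r; auto.
Qed.

Hypothesis Hu : vnorm n u < radius.

Lemma flow_lim_small t : 0 <= t <= 1 -> l1norm n (z t) <= rho.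
Proof.
  intros Ht. eapply Rle_trans. apply l1norm_le_vnorm.
  pose proof (flow_lim_norm t Ht). pose proof (pos_INR n). pose proof (exp_pos growth).
  assert (vnorm n u * ((INR n + 1) * exp growth) < rho).
  { unfold radius in Hu. apply Rmult_lt_reg_r with (/ ((INR n + 1) * exp growth)); [apply Rinv_0_lt_compat; nra|].
    rewrite Rmult_assoc, Rinv_r, Rmult_1_r by nra. exact Hu. }
  pose proof (vnorm_nonneg n u). pose proof (vnorm_nonneg n (z t)).
  assert (INR n * vnorm n (z t) <= INR n * (exp growth * vnorm n u)) by (apply Rmult_le_compat_l; auto).
  nra.
Qed.

Lemma flow_lim_sol : is_flow_sol n A G x u z.
Proof.
  split; [intros k Hk; apply flow_lim_at0; auto|].
  intros t Ht k Hk.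
  replace (Cmult (Copp (Clog x)) (Cplus (matvec n A (z t) k) (eval_poly n G (cpow_real x (1 - t)) (z t) k)))
    with (tfield n A G x rho t (z t) k).
  { apply flow_lim_deriv; auto. apply boule01; auto. }
  assert (Hid : forall j, (j < n)%nat -> retract n rho (z t) j = z t j)
    by (intros; apply retract_id; auto; apply flow_lim_small; auto).
  unfold tfield, neglog, xcurve. rewrite clamp_id by auto.
  rewrite (matvec_ext n A _ _ Hid), !eval_poly_eval_list, (eval_list_ext n (G k) _ _ _ Hid). auto.
Qed.

(* Every solution starting in the ball of radius r stays in the ball of
   radius rho, since it coincides with the Picard limit. *)
Lemma flow_small y : is_flow_sol n A G x u y -> forall t, 0 <= t <= 1 -> vnorm n (y t) <= rho.
Proof.
  intros Fy t Ht.
  rewrite (vnorm_ext n (y t) (z t)) by (intros; apply (flow_unique u); auto; apply flow_lim_sol).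
  eapply Rle_trans. apply vnorm_le_l1norm. apply flow_lim_small; auto.
Qed.

End FlowEstimates.

Lemma small_rho (P eps : R) : 0 <= P -> 0 < eps -> exists rho, 0 < rho <= 1 /\ rho * P <= eps.
Proof.
  intros HP He. exists (Rmin 1 (eps / (P + 1))). split; [split|].
  - apply Rmin_pos; [lra| apply Rdiv_lt_0_compat; lra].
  - apply Rmin_l.
  - apply Rle_trans with (eps / (P + 1) * P); [apply Rmult_le_compat_r; [auto| apply Rmin_r]|].
    apply Rmult_le_reg_r with (P + 1); [lra|]. field_simplify; nra.
Qed.

Theorem lemma6p1 (n : nat) (A : nat -> nat -> C) (G : polymap)
  (HG : in_ideal_y2 n G) (delta0 delta1 eps : R)
  (Hd0 : 0 < delta0) (Hd1 : 0 < delta1) (He : 0 < eps)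
  (HA : forall y : nat -> C, vnorm n y <> 0 ->
     (- delta1 + eps) * (vnorm n y) ^ 2 < Re (cinner n (matvec n A y) y) /\
     Re (cinner n (matvec n A y) y) < (- delta0 - eps) * (vnorm n y) ^ 2) :
  exists r c0 c1 : R, 0 < r /\ 0 < c0 /\ 0 < c1 /\
    (forall (x : C) (u : nat -> C), slit_disc2 x -> vnorm n u < r ->
        exists y : R -> nat -> C, is_flow_sol n A G x u y) /\
    (forall (x : C) (u v : nat -> C) (yu yv : R -> nat -> C),
        slit_disc2 x -> vnorm n u < r -> vnorm n v < r ->
        is_flow_sol n A G x u yu -> is_flow_sol n A G x v yv ->
        c1 * Rpower (Cmod x) delta1 * vnorm n (vsub u v)
          <= vnorm n (vsub (yu 1) (yv 1)) /\
        vnorm n (vsub (yu 1) (yv 1))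
          <= c0 * Rpower (Cmod x) delta0 * vnorm n (vsub u v)).
Proof.
  destruct (small_rho (Gsize n G) eps (Gsize_nonneg n G) He) as [rho [[Hrho Hrho1] Hsmall]].
  set (s := slack n A delta1 eps).
  exists (radius n A delta0 delta1 eps rho), (exp s), (exp (- s)).
  split; [apply radius_pos; auto|].
  split; [apply exp_pos|]. split; [apply exp_pos|]. split.
  -
    intros x u Hx Hu. exists (flow_lim n A G x rho u).
    apply (flow_lim_sol n A G delta0 delta1 eps); auto.
  - (* both solutions stay in the ball of radius rho, where the energy
       inequality holds *)
    intros x u v yu yv Hx Hu Hv Fu Fv.
    apply (flow_bilipschitz n A G delta0 delta1 eps HG Hd0 Hd1 He HA x Hx rho Hrho Hrho1 Hsmall u v); auto.
    intros t Ht. split.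
    + apply (flow_small n A G delta0 delta1 eps HG Hd0 Hd1 He HA x Hx rho Hrho Hrho1 Hsmall u); auto.
    + apply (flow_small n A G delta0 delta1 eps HG Hd0 Hd1 He HA x Hx rho Hrho Hrho1 Hsmall v); auto.
Qed.
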